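(* For every $2n_1\in\{18,20\}$, $2n_2\in\{22,24,26\}$, $2n_3\in\{28,30\}$ and every integer $s\ge1$, there exist ternary Euclidean formally self-dual LCD codes with parameters $[4sn_1,2sn_1,6]_3$, $[4sn_2,2sn_2,7]_3$ and $[4sn_3,2sn_3,8]_3$. In addition, a ternary Euclidean formally self-dual LCD $[32s,16s,5]_3$ code exists for every integer $s\ge1$.
   Context: A linear code $\mathcal{C}$ over $\mathbb{F}_3$ is Euclidean LCD if $\mathcal{C}\cap\mathcal{C}^{\perp_E}=\{0\}$, where $\perp_E$ is the dual with respect to $\sum_ix_iy_i$; it is Euclidean formally self-dual if it has the same weight distribution as $\mathcal{C}^{\perp_E}$. $[n,k,d]_3$ denotes length $n$, dimension $k$, minimum distance $d$. *)

From HB Require Import structures.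
From mathcomp Require Import all_boot all_order all_algebra.
Set Implicit Arguments. Unset Strict Implicit. Unset Printing Implicit Defensive.
Import GRing.Theory.
Local Open Scope ring_scope.

(* A ternary linear code of length n is a subspace of F_3^n (row vectors),
   represented as the row space of a square matrix G (mxalgebra convention). *)
Definition code (n : nat) := 'M['F_3]_n.

Definition in_code n (C : code n) (c : 'rV['F_3]_n) : bool := (c <= C)%MS.

(* Euclidean dual: all x with sum_i x_i y_i = 0 for every y in C,
   i.e. x *m C^T = 0; this is the row space of kermx C^T. *)
Definition edual n (C : code n) : code n := kermx C^T.

Definition wt n (c : 'rV['F_3]_n) : nat := #|[set i : 'I_n | c 0 i != 0]|.

Definition dim n (C : code n) : nat := \rank C.

Definition min_dist n (C : code n) (d : nat) : Prop :=
  (exists2 c, in_code C c & (c != 0) && (wt c == d)) /\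
  (forall c, in_code C c -> c != 0 -> (d <= wt c)%N).

Definition wdist n (C : code n) (w : nat) : nat :=
  #|[set c : 'rV['F_3]_n | in_code C c & wt c == w]|.

Definition is_LCD n (C : code n) : Prop := (C :&: edual C == (0 : 'M['F_3]_n))%MS.

Definition is_formally_self_dual n (C : code n) : Prop :=
  forall w, wdist C w = wdist (edual C) w.

Definition fsd_lcd_code n (C : code n) (k d : nat) : Prop :=
  [/\ is_LCD C, is_formally_self_dual C, dim C = k & min_dist C d].

From Pilot Require Import Defs.
From mathcomp Require Import all_boot all_order all_algebra.
From mathcomp Require Import zify.
Set Implicit Arguments. Unset Strict Implicit. Unset Printing Implicit Defensive.
Import GRing.Theory.
Local Open Scope ring_scope.

(* Each code is generated by [(1 | B)] with [B] symmetric over F_3.  Its dual is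
   then generated by [(-B | 1)], and [(x, y) |-> (-y, x)] is a weight-preserving
   bijection between the two, so the code is formally self-dual; it meets its dual
   only in 0 when [1 + B^2] is invertible; and its minimum distance is the least
   value of [wt x + wt (x B)] over [x != 0].  These properties survive replacing [B]
   by the block-diagonal sum of [s] copies of [B], so one matrix of each order
   16, 18, ..., 30 suffices.  For those, the properties are certified by
   computation: symmetry and the inverses of [B] and [1 + B^2] are checked
   entrywise, and as [d <= 2(t + 1)], a word [x] with [wt x + wt (x B) < d] has
   [wt x <= t] or [wt (x B) <= t], so only the words of weight at most [t] need to
   be tried, against both [B] and [B^-1]. *)

Lemma wtE n (c : 'rV['F_3]_n) : wt c = (\sum_(i < n) (c ord0 i != 0%R))%N.
Proof.
rewrite /wt cardsE -sum1_card big_mkcond /=; apply: eq_bigr => i _.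
by rewrite unfold_in; case: (c 0 i != 0).
Qed.

Lemma wt0 n : wt (0 : 'rV['F_3]_n) = 0%N.
Proof. by rewrite wtE big1 // => i _; rewrite mxE eqxx. Qed.

Lemma wt_opp n (c : 'rV['F_3]_n) : wt (- c) = wt c.
Proof. by rewrite !wtE; apply: eq_bigr => i _; rewrite mxE oppr_eq0. Qed.

Lemma wt_row_mx m n (a : 'rV['F_3]_m) (b : 'rV['F_3]_n) :
  wt (row_mx a b) = (wt a + wt b)%N.
Proof.
rewrite !wtE big_split_ord /=.
by congr (_ + _)%N; apply: eq_bigr => i _; rewrite (row_mxEl, row_mxEr).
Qed.

Lemma wdist_le_isometry n (C D : code n) (f : 'rV['F_3]_n -> 'rV['F_3]_n) w :
  injective f -> (forall c, wt (f c) = wt c) ->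
  (forall c, in_code C c -> in_code D (f c)) -> (wdist C w <= wdist D w)%N.
Proof.
move=> f_inj wt_f fCD; rewrite /wdist -(card_imset _ f_inj).
apply/subset_leq_card/subsetP => _ /imsetP [c + ->]; rewrite !inE wt_f.
by case/andP=> /fCD -> ->.
Qed.

Section SystematicCode.

Variables (m : nat) (B : 'M['F_3]_m).

Definition sys_code : code (m + m) := col_mx (row_mx 1%:M B) 0.

Lemma sys_codeP c :
  reflect (exists x, c = row_mx x (x *m B)) (in_code sys_code c).
Proof.
apply: (iffP submxP) => [[z ->]|[x ->]]; last first.
  by exists (row_mx x 0); rewrite mul_row_col mulmx0 addr0 mul_mx_row mulmx1.
exists (lsubmx z); rewrite -{1}[z]hsubmxK mul_row_col mulmx0 addr0.
by rewrite mul_mx_row mulmx1.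
Qed.

Lemma sys_code_dim : Defs.dim sys_code = m.
Proof.
rewrite /Defs.dim -addsmxE addsmx0; apply/eqP; rewrite eqn_leq rank_leq_row /=.
have := mxrankM_maxl (row_mx 1%:M B) (col_mx 1%:M 0).
by rewrite mul_row_col mulmx1 mulmx0 addr0 mxrank1.
Qed.

Lemma sys_code_min_dist d :
  (exists2 x, x != 0 & (wt x + wt (x *m B))%N = d) ->
  (forall x, x != 0 -> (d <= wt x + wt (x *m B))%N) ->
  min_dist sys_code d.
Proof.
move=> [x x_neq0 wt_x] d_le; split.
  exists (row_mx x (x *m B)); first by apply/sys_codeP; exists x.
  by rewrite row_mx_eq0 negb_and x_neq0 wt_row_mx wt_x eqxx.
move=> _ /sys_codeP [y ->]; rewrite wt_row_mx => yB_neq0; apply: d_le.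
by apply: contraNneq yB_neq0 => ->; rewrite mul0mx row_mx0.
Qed.

Hypothesis B_sym : B^T = B.

Lemma in_dual_sys_code c :
  in_code (edual sys_code) c = (lsubmx c + rsubmx c *m B == 0).
Proof.
rewrite /in_code /edual sub_kermx tr_col_mx tr_row_mx trmx1 B_sym trmx0.
rewrite mul_mx_row mulmx0 -[c in c *m col_mx _ _]hsubmxK mul_row_col mulmx1.
by rewrite row_mx_eq0 eqxx andbT.
Qed.

Lemma sys_code_LCD : (1%:M + B *m B) \in unitmx -> is_LCD sys_code.
Proof.
move=> IBB_unit; apply/andP; split; last exact: sub0mx.
apply/row_subP => i; have := row_sub i (sys_code :&: edual sys_code)%MS.
rewrite sub_capmx => /andP [/sys_codeP [x ->]].
rewrite -/(in_code _ _) in_dual_sys_code row_mxKl row_mxKr => /eqP x_dual.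
have -> : x = 0.
  by rewrite -[x](mulmxK IBB_unit) mulmxDr mulmx1 mulmxA x_dual mul0mx.
by rewrite mul0mx row_mx0 sub0mx.
Qed.

Definition swap_halves (c : 'rV['F_3]_(m + m)) := row_mx (- rsubmx c) (lsubmx c).

Lemma wt_swap_halves c : wt (swap_halves c) = wt c.
Proof. by rewrite wt_row_mx wt_opp -{3}[c]hsubmxK wt_row_mx addnC. Qed.

Lemma swap_halves_inj : injective swap_halves.
Proof.
move=> c1 c2 /eq_row_mx [/oppr_inj eq_r eq_l].
by rewrite -[c1]hsubmxK -[c2]hsubmxK eq_r eq_l.
Qed.

Lemma sys_code_fsd : is_formally_self_dual sys_code.
Proof.
move=> w; apply/eqP; rewrite eqn_leq.
apply/andP; split; apply: wdist_le_isometry swap_halves_inj wt_swap_halves _.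
  move=> _ /sys_codeP [x ->]; rewrite in_dual_sys_code.
  by rewrite /swap_halves !row_mxKl !row_mxKr addNr.
move=> c; rewrite in_dual_sys_code addr_eq0 => /eqP c_l.
by apply/sys_codeP; exists (- rsubmx c); rewrite /swap_halves c_l mulNmx.
Qed.

End SystematicCode.

Definition fsd_lcd_block d m (B : 'M['F_3]_m) :=
  [/\ B^T = B, (1%:M + B *m B) \in unitmx &
      forall x : 'rV_m, x != 0 -> (d <= wt x + wt (x *m B))%N].

Definition attains_weight d m (B : 'M['F_3]_m) :=
  exists2 x : 'rV_m, x != 0 & (wt x + wt (x *m B))%N = d.

Lemma fsd_lcd_code_sys d m (B : 'M['F_3]_m) :
  fsd_lcd_block d B -> attains_weight d B -> fsd_lcd_code (sys_code B) m d.
Proof.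
case=> B_sym IBB_unit d_le d_attained; split.
- exact: sys_code_LCD.
- exact: sys_code_fsd.
- exact: sys_code_dim.
- exact: sys_code_min_dist.
Qed.

Lemma fsd_lcd_block0 d (B : 'M['F_3]_0) : fsd_lcd_block d B.
Proof.
split; first by rewrite [B]flatmx0 [_^T]flatmx0.
  by rewrite unitmxE det_mx00 unitr1.
by move=> x; rewrite [x]thinmx0 eqxx.
Qed.

Lemma fsd_lcd_block_diag d p m (A : 'M['F_3]_p) (B : 'M['F_3]_m) :
  fsd_lcd_block d A -> fsd_lcd_block d B -> fsd_lcd_block d (block_mx A 0 0 B).
Proof.
case=> A_sym IAA_unit dA [B_sym IBB_unit dB]; split.
- by rewrite tr_block_mx A_sym B_sym !trmx0.
- rewrite mulmx_block !mulmx0 !mul0mx !addr0 !add0r (scalar_mx_block p m).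
  by rewrite add_block_mx !addr0 unitmxE det_ublock unitrM -!unitmxE IAA_unit.
- move=> x; rewrite -[x]hsubmxK mul_row_block !mulmx0 addr0 add0r !wt_row_mx.
  have [-> x_neq0|xl_neq0 _] := eqVneq (lsubmx x) 0; last by have := dA _ xl_neq0; lia.
  have xr_neq0 : rsubmx x != 0 by apply: contraNneq x_neq0 => ->; rewrite row_mx0.
  by have := dB _ xr_neq0; lia.
Qed.

Lemma attains_weight_block_diag d p m (A : 'M['F_3]_p) (B : 'M['F_3]_m) :
  attains_weight d A -> attains_weight d (block_mx A 0 0 B).
Proof.
case=> x x_neq0 wt_x; exists (row_mx x 0).
  by rewrite -row_mx0; apply: contra_neq x_neq0 => /eq_row_mx [].
by rewrite mul_row_block !mulmx0 mul0mx !addr0 !wt_row_mx wt0 !addn0.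
Qed.

Lemma fsd_lcd_code_repeat d p (A : 'M['F_3]_p) s :
  fsd_lcd_block d A -> attains_weight d A -> (0 < s)%N ->
  exists C : code (s * p + s * p), fsd_lcd_code C (s * p) d.
Proof.
move=> dA A_attains s_gt0.
suff [B dB B_attains] : exists2 B : 'M_(s * p), fsd_lcd_block d B &
    (0 < s)%N -> attains_weight d B.
  by exists (sys_code B); apply: fsd_lcd_code_sys (B_attains s_gt0).
elim: {s_gt0}s => [|s [B dB _]]; first by exists 0; first exact: fsd_lcd_block0.
rewrite mulSn; exists (block_mx A 0 0 B); first exact: fsd_lcd_block_diag.
by move=> _; apply: attains_weight_block_diag.
Qed.

Lemma fsd_lcd_code_double d n (A : 'M['F_3]_n.*2) s :
  fsd_lcd_block d A /\ attains_weight d A -> (0 < s)%N ->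
  exists C : code (4 * s * n), fsd_lcd_code C (2 * s * n) d.
Proof.
case=> dA A_attains s_gt0.
have -> : (4 * s * n = s * n.*2 + s * n.*2)%N by rewrite -!muln2; lia.
have -> : (2 * s * n = s * n.*2)%N by rewrite -muln2; lia.
exact: (fsd_lcd_code_repeat dA A_attains s_gt0).
Qed.

Lemma wt_delta_mx m (i : 'I_m) : wt (delta_mx 0 i : 'rV['F_3]_m) = 1%N.
Proof.
rewrite /wt -[RHS](cards1 i); apply: eq_card => j.
by rewrite !inE mxE eqxx /= [j == i]eq_sym; case: (i == j); rewrite ?oner_eq0 ?eqxx.
Qed.

Lemma attains_weight_row d m (B : 'M['F_3]_m) i :
  (wt (row i B)).+1 = d -> attains_weight d B.
Proof.
move=> wt_row; exists (delta_mx 0 i); last by rewrite -rowE wt_delta_mx.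
by apply/eqP => /matrixP /(_ 0 i); rewrite !mxE !eqxx => /eqP; rewrite oner_eq0.
Qed.

Lemma weight_bound_of_inverse t d p (A A' : 'M['F_3]_p) :
  A *m A' = 1%:M -> (d <= t.+1 + t.+1)%N ->
  (forall x, x != 0 -> (wt x <= t)%N -> (d <= wt x + wt (x *m A))%N) ->
  (forall y, y != 0 -> (wt y <= t)%N -> (d <= wt y + wt (y *m A'))%N) ->
  forall x, x != 0 -> (d <= wt x + wt (x *m A))%N.
Proof.
move=> AA' d_le lowA lowA' x x_neq0.
have [wt_x|t_lt_wt_x] := leqP (wt x) t; first exact: lowA.
have [wt_xA|] := leqP (wt (x *m A)) t; last by lia.
have xAA' : x *m A *m A' = x by rewrite -mulmxA AA' mulmx1.
have xA_neq0 : x *m A != 0 by apply: contraNneq x_neq0 => xA0; rewrite -xAA' xA0 mul0mx.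
by have := lowA' _ xA_neq0 wt_xA; rewrite xAA' addnC.
Qed.

(* Matrices over F_3 are encoded as lists of rows of naturals, read modulo 3 by
   [seqmx_mx], so that the checks below run under [vm_compute]. *)
Section SeqMatrices.

Local Open Scope nat_scope.

Fixpoint combine_rows p (l : seq nat) (L : seq (seq nat)) : seq nat :=
  match l, L with
  | v :: l', r :: L' =>
      let acc := combine_rows p l' L' in
      if v == 0 then acc else [seq ab.1 + v * ab.2 | ab <- zip acc r]
  | _, _ => nseq p 0
  end.

Definition nzcount (l : seq nat) := count (fun v => v != 0) l.

Definition mod3 (l : seq nat) := [seq v %% 3 | v <- l].

Fixpoint low_words t n : seq (seq nat) :=
  if n is n'.+1 then
    [seq 0 :: l | l <- low_words t n'] ++
    (if t is t'.+1 then [seq v :: l | v <- [:: 1; 2], l <- low_words t' n'] else [::])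
  else [:: [::]].

Definition entry (L : seq (seq nat)) i j := nth 0 (nth [::] L i) j.

Definition seqmx_wf p (L : seq (seq nat)) :=
  (size L == p) && all (fun r => size r == p) L.

Definition seqmx_mul p (L1 L2 : seq (seq nat)) := [seq combine_rows p r L2 | r <- L1].

Definition seqmx_sym p L :=
  all (fun i => all (fun j => entry L i j == entry L j i) (iota 0 p)) (iota 0 p).

Definition seqmx_sum_id3 p Y Z :=
  all (fun i => all (fun j => (entry Y i j + entry Z i j) %% 3 == (i == j)) (iota 0 p))
    (iota 0 p).

Lemma low_words_complete l t :
  all (fun v => v < 3) l -> nzcount l <= t -> l \in low_words t (size l).
Proof.
elim: l t => [|v l IHl] t /=; first by rewrite inE.
case/andP=> + l_lt3; rewrite /nzcount /= -/(nzcount l) mem_cat.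
case: v => [_ l_t|v v_lt3]; first by rewrite map_f ?IHl.
case: t => [|t] //= l_t; rewrite !mem_cat.
by case: v v_lt3 => [|[]] // _; rewrite map_f ?IHl ?orbT.
Qed.

Lemma seqmx_wf_size p L : seqmx_wf p L -> size L = p.
Proof. by case/andP=> /eqP. Qed.

Lemma seqmx_wf_row p L i : seqmx_wf p L -> i < p -> size (nth [::] L i) = p.
Proof.
case/andP=> /eqP L_p /allP L_rows i_p; apply/eqP/L_rows.
by rewrite mem_nth ?L_p.
Qed.

Lemma size_combine_rows p l L : size l <= size L ->
  (forall i, i < size l -> size (nth [::] L i) = p) -> size (combine_rows p l L) = p.
Proof.
elim: l L => [|v l IHl] [|r L] //=; rewrite ?size_nseq // ltnS => l_L L_rows.
have IH : size (combine_rows p l L) = p by apply: IHl => // i; apply: (L_rows i.+1).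
by case: eqP => // _; rewrite size_map size_zip IH (L_rows 0) ?minnn.
Qed.

Lemma nth_combine_rows p l L j : size l <= size L ->
  (forall i, i < size l -> size (nth [::] L i) = p) -> j < p ->
  nth 0 (combine_rows p l L) j = \sum_(0 <= i < size l) nth 0 l i * entry L i j.
Proof.
elim: l L => [|v l IHl] L.
  by rewrite big_geq //; case: L => [|r L] _ _ j_p; rewrite /= nth_nseq j_p.
case: L => [//|r L] /=; rewrite ltnS => l_L L_rows j_p.
have L_rows' i : i < size l -> size (nth [::] L i) = p by apply: (L_rows i.+1).
rewrite big_nat_recl //= -[in RHS]/(\sum_(0 <= i < size l) nth 0 l i * entry L i j).
rewrite -IHl //; case: eqP => [->|_]; first by rewrite mul0n.
have size_acc : size (combine_rows p l L) = p by apply: size_combine_rows.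
rewrite (nth_map (0, 0)) ?nth_zip /= ?size_zip ?size_acc ?(L_rows 0) ?minnn //.
by rewrite addnC.
Qed.

Lemma seqmx_wf_mul p L1 L2 :
  seqmx_wf p L1 -> seqmx_wf p L2 -> seqmx_wf p (seqmx_mul p L1 L2).
Proof.
move=> wf1 wf2; apply/andP; split; first by rewrite size_map (seqmx_wf_size wf1).
apply/allP => _ /mapP [r r_L1 ->]; apply/eqP.
case/andP: wf1 => _ /allP /(_ _ r_L1) /eqP r_p.
apply: size_combine_rows; rewrite r_p ?(seqmx_wf_size wf2) // => i.
exact: seqmx_wf_row.
Qed.

End SeqMatrices.

Definition seqmx_mx p (L : seq (seq nat)) : 'M['F_3]_p := \matrix_(i, j) (entry L i j)%:R.

Definition seq_of_row p (x : 'rV['F_3]_p) := [seq (x 0 i : nat) | i <- enum 'I_p].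

Lemma size_seq_of_row p (x : 'rV['F_3]_p) : size (seq_of_row x) = p.
Proof. by rewrite size_map size_enum_ord. Qed.

Lemma nth_seq_of_row p (x : 'rV['F_3]_p) (i : 'I_p) : nth 0%N (seq_of_row x) i = x 0 i.
Proof. by rewrite (nth_map i) ?size_enum_ord // nth_ord_enum. Qed.

Lemma seq_of_row_lt3 p (x : 'rV['F_3]_p) : all (fun v => v < 3)%N (seq_of_row x).
Proof. by apply/allP => _ /mapP [i _ ->]; apply: ltn_ord. Qed.

Lemma seq_of_row_eq0 p (x : 'rV['F_3]_p) : all (eq_op^~ 0%N) (seq_of_row x) = (x == 0).
Proof.
apply/allP/eqP => [x0|-> _ /mapP [i _ ->]]; last by rewrite mxE.
apply/rowP => i; rewrite mxE; apply: val_inj; apply/eqP/x0.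
by apply: (map_f (fun i => x 0 i : nat)); rewrite mem_enum.
Qed.

Lemma wt_seq_of_row p (x : 'rV['F_3]_p) : wt x = nzcount (seq_of_row x).
Proof.
rewrite wtE /nzcount count_map -sum1_count enumT [index_enum _]unlock.
by rewrite [RHS]big_mkcond; apply: eq_bigr => i _; rewrite -val_eqE /=; case: eqP.
Qed.

Lemma seq_of_row_mul p L (x : 'rV['F_3]_p) : seqmx_wf p L ->
  seq_of_row (x *m seqmx_mx p L) = mod3 (combine_rows p (seq_of_row x) L).
Proof.
move=> L_wf; have x_size := size_seq_of_row x.
have L_size : (size (seq_of_row x) <= size L)%N by rewrite x_size (seqmx_wf_size L_wf).
have L_rows i : (i < size (seq_of_row x))%N -> size (nth [::] L i) = p.
  by rewrite x_size; apply: seqmx_wf_row.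
have size_comb := size_combine_rows L_size L_rows.
apply: (@eq_from_nth _ 0%N) => [|j]; first by rewrite size_seq_of_row size_map size_comb.
rewrite size_seq_of_row => j_p; rewrite -[j]/(nat_of_ord (Ordinal j_p)).
rewrite nth_seq_of_row (nth_map 0%N) ?size_comb // nth_combine_rows //.
rewrite x_size big_mkord -val_Fp_nat // natr_sum !mxE.
by congr val; apply: eq_bigr => i _; rewrite natrM nth_seq_of_row natr_Zp mxE.
Qed.

Lemma seqmx_mxM p L1 L2 : seqmx_wf p L1 -> seqmx_wf p L2 ->
  seqmx_mx p (seqmx_mul p L1 L2) = seqmx_mx p L1 *m seqmx_mx p L2.
Proof.
move=> wf1 wf2; apply/matrixP => i j; rewrite !mxE /entry (nth_map [::]);
  last by rewrite (seqmx_wf_size wf1).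
rewrite nth_combine_rows ?(seqmx_wf_size wf2) ?(seqmx_wf_row wf1) // => [|k k_p].
  by rewrite big_mkord natr_sum; apply: eq_bigr => k _; rewrite !mxE natrM.
exact: seqmx_wf_row.
Qed.

Lemma seqmx_mx_nil p : seqmx_mx p [::] = 0.
Proof. by apply/matrixP => i j; rewrite !mxE /entry !nth_nil. Qed.

Lemma mem_iota_ord p (i : 'I_p) : (i : nat) \in iota 0 p.
Proof. by rewrite mem_iota ltn_ord. Qed.

Lemma seqmx_mx_sym p L : seqmx_sym p L -> (seqmx_mx p L)^T = seqmx_mx p L.
Proof.
move=> /allP L_sym; apply/matrixP => i j; rewrite !mxE.
by have /allP/(_ i (mem_iota_ord i))/eqP -> := L_sym j (mem_iota_ord j).
Qed.

Lemma seqmx_mx_sum_id3 p Y Z :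
  seqmx_sum_id3 p Y Z -> seqmx_mx p Y + seqmx_mx p Z = 1%:M.
Proof.
move=> /allP YZ_id; apply/matrixP => i j; rewrite !mxE -natrD -Fp_nat_mod //.
by have /allP/(_ j (mem_iota_ord j))/eqP -> := YZ_id i (mem_iota_ord i).
Qed.

Lemma wt_row_seqmx p L (i : 'I_p) : seqmx_wf p L ->
  wt (row i (seqmx_mx p L)) = nzcount (mod3 (nth [::] L i)).
Proof.
move=> L_wf; rewrite wt_seq_of_row; congr nzcount.
have row_p := seqmx_wf_row L_wf (ltn_ord i).
apply: (@eq_from_nth _ 0%N) => [|j]; first by rewrite size_seq_of_row size_map row_p.
rewrite size_seq_of_row => j_p; rewrite -[j]/(nat_of_ord (Ordinal j_p)).
by rewrite nth_seq_of_row (nth_map 0%N) ?row_p // !mxE val_Fp_nat.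
Qed.

Definition low_word_ok d p L l :=
  all (eq_op^~ 0%N) l || (d <= nzcount l + nzcount (mod3 (combine_rows p l L)))%N.

Definition check_low_words t d p L := all (low_word_ok d p L) (low_words t p).

Lemma check_low_wordsP t d p L : seqmx_wf p L -> check_low_words t d p L ->
  forall x : 'rV_p, x != 0 -> (wt x <= t)%N -> (d <= wt x + wt (x *m seqmx_mx p L))%N.
Proof.
move=> L_wf /allP L_ok x x_neq0 wt_x.
have x_low : seq_of_row x \in low_words t p.
  by rewrite -{2}(size_seq_of_row x) low_words_complete ?seq_of_row_lt3 -?wt_seq_of_row.
have := L_ok _ x_low; rewrite /low_word_ok seq_of_row_eq0 (negbTE x_neq0).
by rewrite !wt_seq_of_row seq_of_row_mul.
Qed.

(* [Binv] and [S] are the inverses of [B] and of [1 + B^2] ([[::]] encodes the zero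
   matrix), and row [i] of [B] has weight [d - 1]. *)
Definition fsd_lcd_certificate p t d B Binv S i :=
  [&& seqmx_wf p B, seqmx_wf p Binv, seqmx_wf p S, seqmx_sym p B,
      seqmx_sum_id3 p (seqmx_mul p B Binv) [::],
      seqmx_sum_id3 p (seqmx_mul p (seqmx_mul p B B) S) S,
      (d <= t.+1 + t.+1)%N, check_low_words t d p B, check_low_words t d p Binv,
      (i < p)%N & (nzcount (mod3 (nth [::] B i))).+1 == d].

Lemma fsd_lcd_certificateP p t d B Binv S i :
  fsd_lcd_certificate p t d B Binv S i ->
  fsd_lcd_block d (seqmx_mx p B) /\ attains_weight d (seqmx_mx p B).
Proof.
case/and5P => B_wf Binv_wf S_wf B_sym /and5P [BBinv_id IBBS_id d_le B_low].
case/and3P => Binv_low i_p /eqP wt_row_i.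
have BBinv : seqmx_mx p B *m seqmx_mx p Binv = 1%:M.
  by rewrite -seqmx_mxM // -(seqmx_mx_sum_id3 BBinv_id) seqmx_mx_nil addr0.
have IBB_S : (1%:M + seqmx_mx p B *m seqmx_mx p B) *m seqmx_mx p S = 1%:M.
  by rewrite mulmxDl mul1mx -!seqmx_mxM ?seqmx_wf_mul // addrC seqmx_mx_sum_id3.
split; first split.
- exact: seqmx_mx_sym.
- by case/mulmx1_unit: IBB_S.
- by apply: weight_bound_of_inverse BBinv d_le _ _; apply: check_low_wordsP.
- by apply: (attains_weight_row (i := Ordinal i_p)); rewrite wt_row_seqmx.
Qed.

Definition B16 : seq (seq nat) := [:: [:: 2; 1; 1; 1; 0; 2; 0; 0; 0; 2; 0; 2; 2; 0; 2; 0]; [:: 1; 0; 2; 2; 1; 1; 2; 0; 0; 1; 2; 0; 0; 0; 2; 0]; [:: 1; 2; 1; 0; 0; 1; 2; 0; 2; 0; 0; 0; 0; 0; 2; 1]; [:: 1; 2; 0; 0; 2; 1; 0; 0; 0; 2; 0; 1; 0; 1; 1; 0]; [:: 0; 1; 0; 2; 2; 2; 2; 0; 2; 0; 0; 2; 0; 1; 0; 0]; [:: 2; 1; 1; 1; 2; 1; 0; 2; 1; 2; 0; 1; 0; 1; 0; 0]; [:: 0; 2; 2; 0; 2; 0; 2; 0; 0; 1; 0; 0; 0; 0; 2; 0]; [:: 0; 0; 0; 0; 0; 2; 0; 2; 0; 1; 2; 2; 2; 2; 1; 0]; [:: 0; 0; 2; 0; 2; 1; 0; 0; 0; 0; 0;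 0; 2; 0; 0; 0]; [:: 2; 1; 0; 2; 0; 2; 1; 1; 0; 0; 0; 0; 1; 1; 0; 0]; [:: 0; 2; 0; 0; 0; 0; 0; 2; 0; 0; 0; 1; 1; 0; 0; 0]; [:: 2; 0; 0; 1; 2; 1; 0; 2; 0; 0; 1; 1; 0; 0; 0; 0]; [:: 2; 0; 0; 0; 0; 0; 0; 2; 2; 1; 1; 0; 0; 0; 0; 2]; [:: 0; 0; 0; 1; 1; 1; 0; 2; 0; 1; 0; 0; 0; 0; 2; 2]; [:: 2; 2; 2; 1; 0; 0; 2; 1; 0; 0; 0; 0; 0; 2; 2; 0]; [:: 0; 0; 1; 0; 0; 0; 0; 0; 0; 0; 0; 0; 2; 2; 0; 1]].
Definition B16_inv : seq (seq nat) := [:: [:: 0; 1; 0; 1; 1; 2; 1; 0; 2; 2; 1; 0; 1; 0; 2; 1]; [:: 1; 0; 0; 2; 0; 1; 2; 1; 1; 2; 2; 0; 1; 0; 0; 1]; [:: 0; 0; 1; 1; 1; 0; 1; 1; 1; 2; 1; 0; 1; 1; 2; 1]; [:: 1; 2; 1; 2; 2; 0; 0; 0; 0; 2; 2; 2; 0; 1; 0; 0]; [:: 1; 0; 1; 2; 0; 2; 1; 0; 1; 1; 1; 2; 1; 0; 2; 0]; [:: 2; 1; 0; 0; 2; 0; 1; 0; 0; 1; 1; 0; 1; 2; 0; 0]; [:: 1; 2; 1; 0; 1; 1; 2; 1; 1; 1; 1; 1; 2; 1; 0; 2]; [:: 0; 1; 1; 0; 0; 0; 1; 1; 1; 0; 1;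 0; 2; 1; 0; 2]; [:: 2; 1; 1; 0; 1; 0; 1; 1; 2; 1; 2; 2; 0; 2; 0; 1]; [:: 2; 2; 2; 2; 1; 1; 1; 0; 1; 2; 2; 1; 1; 2; 2; 1]; [:: 1; 2; 1; 2; 1; 1; 1; 1; 2; 2; 1; 2; 2; 1; 0; 2]; [:: 0; 0; 0; 2; 2; 0; 1; 0; 2; 1; 2; 2; 1; 0; 1; 1]; [:: 1; 1; 1; 0; 1; 1; 2; 2; 0; 1; 2; 1; 2; 1; 2; 2]; [:: 0; 0; 1; 1; 0; 2; 1; 1; 2; 2; 1; 0; 1; 0; 0; 0]; [:: 2; 0; 2; 0; 2; 0; 0; 0; 0; 2; 0; 1; 2; 0; 1; 0]; [:: 1; 1; 1; 0; 0; 0; 2; 2; 1; 1; 2; 1; 2; 0; 0; 2]].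
Definition B16_sq1_inv : seq (seq nat) := [:: [:: 2; 0; 0; 1; 1; 2; 1; 0; 1; 0; 2; 1; 0; 0; 0; 2]; [:: 0; 1; 1; 0; 0; 2; 1; 1; 1; 2; 2; 2; 0; 0; 1; 2]; [:: 0; 1; 1; 1; 0; 1; 1; 2; 2; 0; 1; 2; 0; 2; 2; 0]; [:: 1; 0; 1; 2; 1; 2; 2; 1; 2; 2; 2; 1; 2; 2; 0; 0]; [:: 1; 0; 0; 1; 1; 1; 2; 2; 1; 1; 2; 2; 2; 1; 1; 1]; [:: 2; 2; 1; 2; 1; 0; 0; 1; 1; 0; 0; 2; 0; 2; 2; 1]; [:: 1; 1; 1; 2; 2; 0; 2; 0; 0; 2; 1; 1; 1; 0; 1; 0]; [:: 0; 1; 2; 1; 2; 1; 0; 2; 1; 1; 0; 0; 2; 2; 2; 1]; [:: 1; 1; 2; 2; 1; 1; 0; 1; 2; 2; 1; 2; 2; 2; 2; 1]; [:: 0; 2; 0; 2; 1; 0; 2; 1; 2; 2; 2; 1; 0; 1; 2; 0]; [:: 2; 2; 1; 2; 2; 0; 1; 0; 1; 2; 1; 1; 1; 1; 1; 1]; [:: 1; 2; 2; 1; 2; 2; 1; 0; 2; 1; 1; 1; 1; 0; 2; 2]; [:: 0; 0; 0; 2; 2; 0; 1; 2; 2; 0; 1; 1; 0; 0; 1; 1]; [:: 0; 0; 2; 2; 1; 2; 0; 2; 2; 1; 1; 0; 0; 1; 2; 1]; [:: 0; 1; 2; 0; 1; 2; 1; 2; 2; 2; 1; 2; 1; 2; 1;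 0]; [:: 2; 2; 0; 0; 1; 1; 0; 1; 1; 0; 1; 2; 1; 1; 0; 2]].
Definition B18 : seq (seq nat) := [:: [:: 0; 0; 2; 2; 0; 1; 1; 1; 0; 2; 0; 1; 0; 0; 2; 0; 0; 2]; [:: 0; 1; 0; 2; 0; 0; 0; 0; 2; 0; 0; 2; 1; 2; 1; 0; 0; 0]; [:: 2; 0; 0; 1; 0; 2; 0; 1; 0; 0; 1; 2; 2; 0; 1; 1; 0; 2]; [:: 2; 2; 1; 0; 0; 0; 0; 2; 1; 0; 0; 0; 1; 2; 0; 1; 1; 0]; [:: 0; 0; 0; 0; 0; 1; 0; 0; 0; 2; 0; 2; 1; 1; 2; 0; 2; 1]; [:: 1; 0; 2; 0; 1; 2; 0; 0; 2; 0; 1; 2; 0; 2; 2; 0; 0; 1]; [:: 1; 0; 0; 0; 0; 0; 2; 1; 1; 2; 2; 1; 2; 0; 0; 0; 0; 2]; [:: 1; 0; 1; 2; 0; 0; 1; 1; 2; 2; 0; 0; 0; 0; 2; 1; 1; 1]; [:: 0; 2; 0; 1; 0; 2; 1; 2; 0; 1; 0; 0; 0; 0; 2; 0; 2; 0]; [:: 2; 0; 0; 0; 2; 0; 2; 2; 1; 2; 0; 0; 0; 1; 0; 0; 1; 0]; [:: 0; 0; 1; 0; 0; 1; 2; 0; 0; 0; 0; 0; 0; 0; 2; 2; 0; 0]; [:: 1; 2; 2; 0; 2; 2; 1; 0; 0; 0; 0; 0; 0; 0; 0; 0; 0; 0]; [:: 0; 1; 2; 1; 1; 0; 2; 0; 0;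 0; 0; 0; 0; 1; 1; 0; 0; 2]; [:: 0; 2; 0; 2; 1; 2; 0; 0; 0; 1; 0; 0; 1; 0; 0; 2; 0; 1]; [:: 2; 1; 1; 0; 2; 2; 0; 2; 2; 0; 2; 0; 1; 0; 2; 0; 2; 1]; [:: 0; 0; 1; 1; 0; 0; 0; 1; 0; 0; 2; 0; 0; 2; 0; 2; 0; 0]; [:: 0; 0; 0; 1; 2; 0; 0; 1; 2; 1; 0; 0; 0; 0; 2; 0; 0; 0]; [:: 2; 0; 2; 0; 1; 1; 2; 1; 0; 0; 0; 0; 2; 1; 1; 0; 0; 1]].
Definition B18_inv : seq (seq nat) := [:: [:: 2; 0; 2; 0; 2; 2; 1; 1; 0; 0; 1; 0; 2; 1; 2; 1; 2; 2]; [:: 0; 2; 0; 0; 1; 0; 0; 0; 2; 0; 2; 1; 0; 1; 0; 0; 1; 1]; [:: 2; 0; 1; 1; 1; 2; 2; 1; 1; 0; 0; 1; 2; 2; 0; 1; 0; 1]; [:: 0; 0; 1; 0; 0; 1; 2; 2; 0; 1; 1; 2; 1; 2; 0; 0; 0; 2]; [:: 2; 1; 1; 0; 0; 2; 2; 1; 2; 1; 2; 0; 0; 2; 0; 1; 2; 0]; [:: 2; 0; 2; 1; 2; 0; 2; 2; 1; 0; 2; 1; 0; 0; 0; 0; 1; 2]; [:: 1; 0; 2; 2; 2; 2; 2; 0; 0; 1; 2; 1; 0; 1; 1; 1; 2; 2]; [:: 1; 0; 1; 2; 1; 2; 0; 2; 1; 0; 0; 0; 2; 1; 2; 1; 2;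 2]; [:: 0; 2; 1; 0; 2; 1; 0; 1; 1; 1; 2; 1; 1; 0; 2; 0; 0; 2]; [:: 0; 0; 0; 1; 1; 0; 1; 0; 1; 2; 2; 0; 2; 1; 1; 1; 0; 0]; [:: 1; 2; 0; 1; 2; 2; 2; 0; 2; 2; 1; 0; 2; 0; 2; 0; 2; 2]; [:: 0; 1; 1; 2; 0; 1; 1; 0; 1; 0; 0; 1; 2; 0; 1; 0; 0; 2]; [:: 2; 0; 2; 1; 0; 0; 0; 2; 1; 2; 2; 2; 2; 2; 1; 1; 0; 1]; [:: 1; 1; 2; 2; 2; 0; 1; 1; 0; 1; 0; 0; 2; 0; 2; 2; 0; 1]; [:: 2; 0; 0; 0; 0; 0; 1; 2; 2; 1; 2; 1; 1; 2; 1; 1; 2; 2]; [:: 1; 0; 1; 0; 1; 0; 1; 1; 0; 1; 0; 0; 1; 2; 1; 2; 0; 2]; [:: 2; 1; 0; 0; 2; 1; 2; 2; 0; 0; 2; 0; 0; 0; 2; 0; 2; 0]; [:: 2; 1; 1; 2; 0; 2; 2; 2; 2; 0; 2; 2; 1; 1; 2; 2; 0; 0]].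
Definition B18_sq1_inv : seq (seq nat) := [:: [:: 2; 0; 0; 2; 0; 1; 0; 1; 2; 0; 2; 2; 0; 2; 2; 2; 0; 0]; [:: 0; 0; 2; 0; 1; 2; 1; 0; 2; 0; 2; 2; 0; 2; 1; 1; 1; 2]; [:: 0; 2; 2; 1; 1; 1; 1; 0; 0; 2; 0; 1; 0; 2; 0; 2; 0; 0]; [:: 2; 0; 1; 2; 1; 0; 0; 1; 1; 0; 1; 1; 1; 0; 1; 1; 0; 2]; [:: 0; 1; 1; 1; 1; 2; 0; 1; 2; 0; 1; 0; 0; 0; 1; 2; 1; 1]; [:: 1; 2; 1; 0; 2; 0; 1; 1; 2; 2; 2; 0; 2; 1; 2; 1; 1; 2]; [:: 0; 1; 1; 0; 0; 1; 1; 2; 2; 2; 2; 0; 2; 1; 2; 1; 2; 0]; [:: 1; 0; 0; 1; 1; 1; 2; 0; 0; 1; 0; 1; 1; 1; 0; 2; 2; 0]; [:: 2; 2; 0; 1; 2; 2; 2; 0; 0; 1; 1; 0; 0; 2; 1; 2; 1; 0]; [:: 0; 0; 2; 0; 0; 2; 2; 1; 1; 2; 1; 1; 1; 0; 1; 2; 1; 0]; [:: 2; 2; 0; 1; 1; 2; 2; 0; 1; 1; 2; 0; 2; 2; 1; 0; 2; 1]; [:: 2; 2; 1; 1; 0; 0; 0; 1; 0; 1; 0; 0; 2; 2; 1; 1; 0; 2]; [:: 0; 0; 0; 1; 0; 2; 2; 1; 0; 1; 2; 2; 2; 2; 2; 0; 2; 0]; [:: 2; 2; 2; 0; 0; 1;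 1; 1; 2; 0; 2; 2; 2; 1; 1; 1; 0; 1]; [:: 2; 1; 0; 1; 1; 2; 2; 0; 1; 1; 1; 1; 2; 1; 2; 1; 0; 2]; [:: 2; 1; 2; 1; 2; 1; 1; 2; 2; 2; 0; 1; 0; 1; 1; 1; 0; 2]; [:: 0; 1; 0; 0; 1; 1; 2; 2; 1; 1; 2; 0; 2; 0; 0; 0; 0; 2]; [:: 0; 2; 0; 2; 1; 2; 0; 0; 0; 0; 1; 2; 0; 1; 2; 2; 2; 2]].
Definition B20 : seq (seq nat) := [:: [:: 0; 0; 0; 1; 1; 0; 0; 2; 0; 2; 0; 1; 0; 0; 1; 2; 0; 0; 2; 1]; [:: 0; 0; 0; 0; 0; 1; 1; 1; 1; 1; 1; 0; 2; 0; 0; 0; 1; 0; 0; 2]; [:: 0; 0; 2; 2; 1; 0; 0; 0; 0; 0; 2; 0; 1; 0; 0; 2; 0; 1; 1; 2]; [:: 1; 0; 2; 0; 2; 0; 0; 2; 0; 1; 0; 0; 0; 0; 0; 0; 2; 1; 1; 1]; [:: 1; 0; 1; 2; 0; 0; 0; 0; 0; 1; 2; 1; 0; 0; 0; 0; 0; 2; 1; 0]; [:: 0; 1; 0; 0; 0; 0; 2; 0; 0; 0; 2; 0; 2; 0; 1; 2; 0; 0; 1; 0]; [:: 0; 1; 0; 0; 0; 2; 2; 2; 1; 2; 1; 0; 0; 0; 0; 2; 0; 0; 0; 2]; [:: 2; 1; 0; 2; 0; 0; 2; 0; 2; 2; 0; 0; 0; 0; 0; 0; 1; 1; 2; 1];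 [:: 0; 1; 0; 0; 0; 0; 1; 2; 0; 1; 0; 2; 0; 0; 0; 0; 0; 2; 1; 0]; [:: 2; 1; 0; 1; 1; 0; 2; 2; 1; 0; 0; 0; 1; 0; 0; 0; 2; 1; 1; 0]; [:: 0; 1; 2; 0; 2; 2; 1; 0; 0; 0; 2; 1; 0; 2; 2; 0; 0; 1; 0; 1]; [:: 1; 0; 0; 0; 1; 0; 0; 0; 2; 0; 1; 0; 0; 2; 0; 0; 0; 0; 0; 0]; [:: 0; 2; 1; 0; 0; 2; 0; 0; 0; 1; 0; 0; 0; 2; 0; 0; 1; 0; 1; 2]; [:: 0; 0; 0; 0; 0; 0; 0; 0; 0; 0; 2; 2; 2; 0; 0; 2; 0; 0; 2; 0]; [:: 1; 0; 0; 0; 0; 1; 0; 0; 0; 0; 2; 0; 0; 0; 2; 2; 1; 0; 1; 0]; [:: 2; 0; 2; 0; 0; 2; 2; 0; 0; 0; 0; 0; 0; 2; 2; 2; 0; 0; 0; 1]; [:: 0; 1; 0; 2; 0; 0; 0; 1; 0; 2; 0; 0; 1; 0; 1; 0; 2; 0; 0; 1]; [:: 0; 0; 1; 1; 2; 0; 0; 1; 2; 1; 1; 0; 0; 0; 0; 0; 0; 0; 0; 0]; [:: 2; 0; 1; 1; 1; 1; 0; 2; 1; 1; 0; 0; 1; 2; 1; 0; 0; 0; 2; 0]; [:: 1; 2; 2; 1; 0; 0; 2; 1; 0; 0; 1; 0; 2; 0; 0; 1; 1; 0; 0; 0]].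
Definition B20_inv : seq (seq nat) := [:: [:: 0; 0; 0; 0; 0; 2; 2; 0; 1; 2; 2; 2; 2; 1; 2; 1; 1; 1; 2; 2]; [:: 0; 1; 0; 1; 0; 0; 1; 0; 2; 1; 0; 0; 0; 1; 1; 2; 2; 1; 1; 2]; [:: 0; 0; 0; 2; 2; 1; 1; 2; 1; 1; 1; 1; 0; 2; 0; 1; 1; 2; 0; 2]; [:: 0; 1; 2; 2; 1; 2; 0; 0; 1; 1; 0; 2; 0; 0; 1; 0; 1; 1; 1; 2]; [:: 0; 0; 2; 1; 1; 2; 2; 1; 0; 2; 1; 1; 0; 2; 0; 2; 2; 1; 2; 1]; [:: 2; 0; 1; 2; 2; 2; 1; 0; 2; 2; 2; 1; 0; 1; 1; 0; 2; 2; 0; 2]; [:: 2; 1; 1; 0; 2; 1; 2; 1; 0; 0; 0; 1; 0; 1; 0; 2; 2; 1; 0; 0]; [:: 0; 0; 2; 0; 1; 0; 1; 1; 2; 1; 2; 0; 1; 1; 2; 2; 2; 2; 1; 2]; [:: 1; 2; 1; 1; 0; 2; 0; 2; 0; 1; 1; 1; 0; 2; 1; 0; 1; 0; 1; 1]; [:: 2; 1; 1; 1; 2; 2; 0; 1; 1; 1; 2; 0; 1; 2; 2; 0; 0; 1; 0; 0]; [:: 2; 0; 1; 0; 1; 2; 0; 2; 1; 2; 0; 2; 1; 2; 2; 2; 2; 2; 1; 2]; [:: 2; 0; 1; 2; 1; 1; 1; 0; 1; 0; 2; 1; 2; 0; 0; 1; 0; 0; 0; 0]; [:: 2; 0; 0;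 0; 0; 0; 0; 1; 0; 1; 1; 2; 1; 0; 0; 0; 0; 0; 2; 2]; [:: 1; 1; 2; 0; 2; 1; 1; 1; 2; 2; 2; 0; 0; 0; 0; 2; 1; 1; 1; 1]; [:: 2; 1; 0; 1; 0; 1; 0; 2; 1; 2; 2; 0; 0; 0; 1; 2; 1; 0; 2; 0]; [:: 1; 2; 1; 0; 2; 0; 2; 2; 0; 0; 2; 1; 0; 2; 2; 0; 0; 1; 0; 0]; [:: 1; 2; 1; 1; 2; 2; 2; 2; 1; 0; 2; 0; 0; 1; 1; 0; 2; 0; 1; 2]; [:: 1; 1; 2; 1; 1; 2; 1; 2; 0; 1; 2; 0; 0; 1; 0; 1; 0; 1; 0; 2]; [:: 2; 1; 0; 1; 2; 0; 0; 1; 1; 0; 1; 0; 2; 1; 2; 0; 1; 0; 0; 2]; [:: 2; 2; 2; 2; 1; 2; 0; 2; 1; 0; 2; 0; 2; 1; 0; 0; 2; 2; 2; 1]].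
Definition B20_sq1_inv : seq (seq nat) := [:: [:: 0; 0; 1; 1; 2; 2; 1; 1; 0; 1; 0; 0; 1; 1; 0; 0; 1; 2; 0; 2]; [:: 0; 1; 1; 2; 2; 2; 1; 1; 2; 1; 0; 0; 2; 0; 0; 2; 2; 2; 1; 1]; [:: 1; 1; 2; 1; 2; 1; 2; 0; 2; 1; 2; 2; 2; 1; 0; 0; 1; 2; 0; 0]; [:: 1; 2; 1; 1; 1; 1; 1; 2; 0; 0; 1; 0; 1; 2; 0; 1; 1; 2; 2; 0]; [:: 2; 2; 2; 1; 1; 0; 2; 2; 1; 0; 2; 2; 1; 0; 1; 1; 2; 2; 0; 0]; [:: 2; 2; 1; 1; 0; 2; 0; 2; 2; 1; 1; 0; 0; 0; 2; 2; 2; 0; 1; 1]; [:: 1; 1; 2; 1; 2; 0; 2; 0; 2; 2; 1; 0; 0; 1; 2; 1; 1; 1; 1; 1]; [:: 1; 1; 0; 2; 2; 2; 0; 2; 1; 0; 0; 1; 0; 0; 1; 1; 2; 0; 0; 2]; [:: 0; 2; 2; 0; 1; 2; 2; 1; 2; 2; 1; 2; 2; 2; 1; 1; 0; 0; 2; 1]; [:: 1; 1; 1; 0; 0; 1; 2; 0; 2; 2; 0; 2; 2; 2; 0; 1; 2; 1; 1; 2]; [:: 0; 0; 2; 1; 2; 1; 1; 0; 1; 0; 2; 0; 1; 2; 1; 1; 2; 1; 1; 0]; [:: 0; 0; 2; 0; 2; 0; 0; 1; 2; 2; 0; 0; 2; 1; 2; 1; 0; 2; 2; 0]; [:: 1;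 2; 2; 1; 1; 0; 0; 0; 2; 2; 1; 2; 0; 2; 2; 2; 0; 2; 2; 1]; [:: 1; 0; 1; 2; 0; 0; 1; 0; 2; 2; 2; 1; 2; 0; 2; 1; 2; 1; 0; 0]; [:: 0; 0; 0; 0; 1; 2; 2; 1; 1; 0; 1; 2; 2; 2; 2; 2; 0; 2; 1; 2]; [:: 0; 2; 0; 1; 1; 2; 1; 1; 1; 1; 1; 1; 2; 1; 2; 2; 1; 2; 0; 2]; [:: 1; 2; 1; 1; 2; 2; 1; 2; 0; 2; 2; 0; 0; 2; 0; 1; 2; 0; 2; 2]; [:: 2; 2; 2; 2; 2; 0; 1; 0; 0; 1; 1; 2; 2; 1; 2; 2; 0; 2; 0; 0]; [:: 0; 1; 0; 2; 0; 1; 1; 0; 2; 1; 1; 2; 2; 0; 1; 0; 2; 0; 0; 2]; [:: 2; 1; 0; 0; 0; 1; 1; 2; 1; 2; 0; 0; 1; 0; 2; 2; 2; 0; 2; 0]].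
Definition B22 : seq (seq nat) := [:: [:: 2; 0; 1; 1; 0; 1; 0; 2; 0; 0; 1; 0; 2; 1; 1; 1; 0; 0; 1; 1; 0; 0]; [:: 0; 0; 0; 1; 2; 0; 1; 0; 0; 0; 0; 0; 0; 0; 0; 0; 0; 0; 0; 2; 1; 1]; [:: 1; 0; 0; 0; 2; 0; 0; 1; 0; 0; 0; 1; 2; 0; 0; 0; 0; 0; 2; 2; 2; 2]; [:: 1; 1; 0; 0; 0; 1; 0; 0; 1; 0; 0; 1; 0; 1; 0; 2; 1; 0; 0; 0; 2; 0]; [:: 0; 2; 2; 0; 1; 1; 0; 1; 0; 0; 2; 0; 0; 0; 0; 0; 2; 1; 0; 0; 0; 0]; [:: 1; 0; 0; 1; 1; 0; 0; 0; 0; 0; 0; 2; 0; 2; 2; 0; 0; 0; 0; 0; 0; 0]; [:: 0; 1; 0; 0; 0; 0; 0; 0; 0; 1; 1; 2; 0; 2; 1; 2; 2; 0; 0; 0; 1; 2]; [:: 2; 0; 1; 0; 1; 0; 0; 0; 0; 2; 0; 1; 0; 2; 1; 0; 0; 0; 0; 1; 0; 2]; [:: 0; 0; 0; 1; 0; 0; 0; 0; 1; 1; 0; 0; 2; 0; 0; 2; 1; 2; 0; 0; 0; 0]; [:: 0; 0; 0; 0; 0; 0; 1; 2; 1; 0; 1; 0; 2; 0; 2; 1; 0; 0; 0; 1; 0; 0]; [:: 1; 0; 0; 0; 2; 0; 1; 0; 0; 1; 0; 0; 1; 2; 2; 0; 0; 0; 0; 2; 2; 1]; [:: 0; 0; 1;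 1; 0; 2; 2; 1; 0; 0; 0; 0; 1; 2; 2; 2; 0; 0; 1; 0; 1; 0]; [:: 2; 0; 2; 0; 0; 0; 0; 0; 2; 2; 1; 1; 0; 0; 0; 0; 1; 1; 0; 1; 0; 0]; [:: 1; 0; 0; 1; 0; 2; 2; 2; 0; 0; 2; 2; 0; 2; 2; 1; 0; 0; 0; 2; 2; 0]; [:: 1; 0; 0; 0; 0; 2; 1; 1; 0; 2; 2; 2; 0; 2; 2; 0; 1; 1; 1; 0; 1; 2]; [:: 1; 0; 0; 2; 0; 0; 2; 0; 2; 1; 0; 2; 0; 1; 0; 0; 0; 0; 2; 1; 0; 0]; [:: 0; 0; 0; 1; 2; 0; 2; 0; 1; 0; 0; 0; 1; 0; 1; 0; 2; 1; 0; 0; 0; 0]; [:: 0; 0; 0; 0; 1; 0; 0; 0; 2; 0; 0; 0; 1; 0; 1; 0; 1; 2; 0; 0; 0; 2]; [:: 1; 0; 2; 0; 0; 0; 0; 0; 0; 0; 0; 1; 0; 0; 1; 2; 0; 0; 0; 1; 0; 2]; [:: 1; 2; 2; 0; 0; 0; 0; 1; 0; 1; 2; 0; 1; 2; 0; 1; 0; 0; 1; 0; 0; 0]; [:: 0; 1; 2; 2; 0; 0; 1; 0; 0; 0; 2; 1; 0; 2; 1; 0; 0; 0; 0; 0; 0; 0]; [:: 0; 1; 2; 0; 0; 0; 2; 2; 0; 0; 1; 0; 0; 0; 2; 0; 0; 2; 2; 0; 0; 0]].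
Definition B22_inv : seq (seq nat) := [:: [:: 1; 0; 2; 1; 0; 1; 2; 2; 1; 2; 1; 0; 1; 0; 2; 0; 2; 2; 0; 1; 2; 2]; [:: 0; 0; 1; 2; 2; 2; 1; 2; 1; 1; 0; 0; 2; 1; 0; 1; 2; 0; 2; 1; 2; 2]; [:: 2; 1; 0; 2; 1; 2; 0; 2; 0; 2; 0; 1; 1; 2; 2; 1; 0; 2; 1; 1; 1; 2]; [:: 1; 2; 2; 2; 1; 1; 1; 1; 2; 0; 0; 1; 0; 0; 0; 0; 1; 2; 2; 1; 1; 1]; [:: 0; 2; 1; 1; 1; 1; 0; 2; 1; 1; 2; 2; 0; 0; 0; 1; 1; 0; 1; 1; 0; 1]; [:: 1; 2; 2; 1; 1; 1; 2; 2; 2; 0; 0; 2; 0; 0; 0; 0; 1; 1; 1; 1; 0; 2]; [:: 2; 1; 0; 1; 0; 2; 1; 2; 1; 2; 0; 1; 2; 2; 0; 2; 2; 2; 2; 0; 0; 1]; [:: 2; 2; 2; 1; 2; 2; 2; 2; 1; 0; 0; 0; 2; 0; 2; 2; 0; 1; 2; 1; 2; 1]; [:: 1; 1; 0; 2; 1; 2; 1; 1; 2; 1; 1; 2; 1; 0; 2; 2; 1; 2; 2; 1; 1; 1]; [:: 2; 1; 2; 0; 1; 0; 2; 0; 1; 1; 0; 2; 1; 2; 2; 2; 0; 2; 2; 2; 0; 1]; [:: 1; 0; 0; 0; 2; 0; 0; 0; 1; 0; 2; 2; 2; 2; 2; 2; 1; 1; 2; 2; 2; 2]; [:: 0; 0;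 1; 1; 2; 2; 1; 0; 2; 2; 2; 1; 2; 0; 2; 1; 1; 0; 1; 1; 2; 2]; [:: 1; 2; 1; 0; 0; 0; 2; 2; 1; 1; 2; 2; 0; 1; 1; 2; 1; 1; 0; 2; 0; 0]; [:: 0; 1; 2; 0; 0; 0; 2; 0; 0; 2; 2; 0; 1; 1; 2; 2; 0; 2; 1; 0; 0; 1]; [:: 2; 0; 2; 0; 0; 0; 0; 2; 2; 2; 2; 2; 1; 2; 1; 1; 0; 2; 1; 2; 1; 1]; [:: 0; 1; 1; 0; 1; 0; 2; 2; 2; 2; 2; 1; 2; 2; 1; 1; 0; 1; 2; 1; 2; 1]; [:: 2; 2; 0; 1; 1; 1; 2; 0; 1; 0; 1; 1; 1; 0; 0; 0; 0; 1; 0; 0; 1; 0]; [:: 2; 0; 2; 2; 0; 1; 2; 1; 2; 2; 1; 0; 1; 2; 2; 1; 1; 2; 1; 1; 1; 2]; [:: 0; 2; 1; 2; 1; 1; 2; 2; 2; 2; 2; 1; 0; 1; 1; 2; 0; 1; 0; 1; 2; 2]; [:: 1; 1; 1; 1; 1; 1; 0; 1; 1; 2; 2; 1; 2; 0; 2; 1; 0; 1; 1; 1; 1; 0]; [:: 2; 2; 1; 1; 0; 0; 0; 2; 1; 0; 2; 2; 0; 0; 1; 2; 1; 1; 2; 1; 0; 0]; [:: 2; 2; 2; 1; 1; 2; 1; 1; 1; 1; 2; 2; 0; 1; 1; 1; 0; 2; 2; 0; 0; 2]].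
Definition B22_sq1_inv : seq (seq nat) := [:: [:: 1; 2; 0; 2; 1; 1; 1; 1; 1; 2; 0; 2; 0; 2; 0; 2; 2; 2; 0; 2; 2; 0]; [:: 2; 0; 2; 0; 1; 0; 2; 0; 2; 2; 2; 0; 0; 0; 0; 2; 2; 1; 2; 2; 2; 2]; [:: 0; 2; 0; 2; 2; 0; 1; 0; 2; 0; 1; 0; 0; 2; 2; 2; 0; 1; 0; 2; 0; 0]; [:: 2; 0; 2; 0; 0; 1; 0; 2; 2; 1; 0; 2; 2; 0; 1; 0; 2; 0; 2; 1; 2; 1]; [:: 1; 1; 2; 0; 1; 2; 1; 2; 1; 2; 2; 0; 2; 0; 1; 1; 0; 2; 1; 0; 2; 0]; [:: 1; 0; 0; 1; 2; 2; 2; 0; 1; 1; 2; 1; 0; 2; 0; 2; 1; 0; 1; 0; 1; 1]; [:: 1; 2; 1; 0; 1; 2; 2; 2; 0; 1; 2; 2; 0; 0; 0; 2; 2; 0; 2; 1; 2; 1]; [:: 1; 0; 0; 2; 2; 0; 2; 0; 0; 0; 0; 0; 2; 2; 2; 1; 0; 2; 2; 0; 0; 0]; [:: 1; 2; 2; 2; 1; 1; 0; 0; 1; 2; 1; 2; 2; 2; 1; 0; 1; 2; 0; 0; 1; 1]; [:: 2; 2; 0; 1; 2; 1; 1; 0; 2; 0; 1; 0; 2; 1; 0; 2; 2; 2; 0; 0; 1; 0]; [:: 0; 2; 1; 0; 2; 2; 2; 0; 1; 1; 0; 2; 1; 2; 1; 2; 0; 1; 1; 1; 2; 2]; [:: 2;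 0; 0; 2; 0; 1; 2; 0; 2; 0; 2; 0; 2; 1; 2; 0; 0; 2; 1; 0; 1; 0]; [:: 0; 0; 0; 2; 2; 0; 0; 2; 2; 2; 1; 2; 2; 2; 2; 0; 2; 0; 0; 1; 1; 2]; [:: 2; 0; 2; 0; 0; 2; 0; 2; 2; 1; 2; 1; 2; 0; 1; 2; 2; 0; 1; 2; 2; 2]; [:: 0; 0; 2; 1; 1; 0; 0; 2; 1; 0; 1; 2; 2; 1; 2; 0; 2; 1; 2; 0; 2; 0]; [:: 2; 2; 2; 0; 1; 2; 2; 1; 0; 2; 2; 0; 0; 2; 0; 0; 1; 0; 0; 2; 2; 2]; [:: 2; 2; 0; 2; 0; 1; 2; 0; 1; 2; 0; 0; 2; 2; 2; 1; 1; 0; 1; 2; 2; 0]; [:: 2; 1; 1; 0; 2; 0; 0; 2; 2; 2; 1; 2; 0; 0; 1; 0; 0; 0; 2; 2; 2; 0]; [:: 0; 2; 0; 2; 1; 1; 2; 2; 0; 0; 1; 1; 0; 1; 2; 0; 1; 2; 0; 1; 0; 2]; [:: 2; 2; 2; 1; 0; 0; 1; 0; 0; 0; 1; 0; 1; 2; 0; 2; 2; 2; 1; 2; 2; 2]; [:: 2; 2; 0; 2; 2; 1; 2; 0; 1; 1; 2; 1; 1; 2; 2; 2; 2; 2; 0; 2; 2; 2]; [:: 0; 2; 0; 1; 0; 1; 1; 0; 1; 0; 2; 0; 2; 2; 0; 2; 0; 0; 2; 2; 2; 2]].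
Definition B24 : seq (seq nat) := [:: [:: 1; 2; 0; 1; 1; 0; 2; 0; 0; 0; 0; 2; 1; 1; 0; 0; 0; 0; 0; 2; 2; 0; 1; 1]; [:: 2; 0; 1; 1; 0; 0; 0; 2; 2; 2; 0; 0; 0; 0; 0; 0; 0; 0; 0; 0; 0; 0; 2; 0]; [:: 0; 1; 1; 2; 0; 1; 0; 2; 1; 0; 2; 2; 1; 0; 0; 1; 0; 2; 0; 0; 1; 0; 1; 1]; [:: 1; 1; 2; 2; 0; 1; 0; 0; 0; 0; 0; 0; 2; 1; 0; 0; 0; 2; 1; 0; 0; 0; 2; 0]; [:: 1; 0; 0; 0; 1; 0; 2; 0; 0; 0; 2; 0; 0; 2; 0; 0; 1; 1; 1; 0; 1; 0; 0; 0]; [:: 0; 0; 1; 1; 0; 0; 0; 0; 2; 1; 1; 0; 0; 0; 1; 2; 0; 0; 1; 0; 0; 2; 0; 0]; [:: 2; 0; 0; 0; 2; 0; 0; 0; 0; 0; 0; 1; 2; 0; 0; 0; 0; 1; 2; 2; 0; 1; 0; 1]; [:: 0; 2; 2; 0; 0; 0; 0; 0; 0; 2; 0; 1; 0; 1; 1; 1; 2; 1; 0; 1; 0; 0; 1; 0]; [:: 0; 2; 1; 0; 0; 2; 0; 0; 0; 1; 1; 2; 2; 2; 1; 0; 0; 1; 2; 1; 0; 0; 2; 0]; [:: 0; 2; 0; 0; 0; 1; 0; 2; 1; 1; 0; 1; 0; 1; 0; 0; 0; 0; 0; 0; 0; 0; 0; 1]; [:: 0; 0; 2; 0; 2; 1;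 0; 0; 1; 0; 0; 0; 0; 0; 0; 0; 0; 2; 0; 0; 0; 1; 0; 1]; [:: 2; 0; 2; 0; 0; 0; 1; 1; 2; 1; 0; 2; 0; 1; 0; 0; 1; 0; 2; 0; 2; 0; 0; 0]; [:: 1; 0; 1; 2; 0; 0; 2; 0; 2; 0; 0; 0; 0; 1; 0; 0; 1; 0; 0; 0; 0; 2; 2; 0]; [:: 1; 0; 0; 1; 2; 0; 0; 1; 2; 1; 0; 1; 1; 0; 0; 2; 0; 0; 0; 0; 0; 2; 0; 0]; [:: 0; 0; 0; 0; 0; 1; 0; 1; 1; 0; 0; 0; 0; 0; 0; 0; 2; 1; 0; 1; 2; 2; 0; 2]; [:: 0; 0; 1; 0; 0; 2; 0; 1; 0; 0; 0; 0; 0; 2; 0; 0; 0; 0; 0; 1; 0; 0; 1; 0]; [:: 0; 0; 0; 0; 1; 0; 0; 2; 0; 0; 0; 1; 1; 0; 2; 0; 1; 2; 0; 0; 0; 0; 1; 0]; [:: 0; 0; 2; 2; 1; 0; 1; 1; 1; 0; 2; 0; 0; 0; 1; 0; 2; 2; 0; 2; 0; 0; 1; 0]; [:: 0; 0; 0; 1; 1; 1; 2; 0; 2; 0; 0; 2; 0; 0; 0; 0; 0; 0; 0; 1; 2; 1; 2; 2]; [:: 2; 0; 0; 0; 0; 0; 2; 1; 1; 0; 0; 0; 0; 0; 1; 1; 0; 2; 1; 0; 0; 1; 0; 2]; [:: 2; 0; 1; 0; 1; 0; 0; 0; 0; 0; 0; 2; 0; 0; 2; 0; 0; 0; 2; 0;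 0; 2; 0; 0]; [:: 0; 0; 0; 0; 0; 2; 1; 0; 0; 0; 1; 0; 2; 2; 2; 0; 0; 0; 1; 1; 2; 2; 1; 0]; [:: 1; 2; 1; 2; 0; 0; 0; 1; 2; 0; 0; 0; 2; 0; 0; 1; 1; 1; 2; 0; 0; 1; 2; 1]; [:: 1; 0; 1; 0; 0; 0; 1; 0; 0; 1; 1; 0; 0; 0; 2; 0; 0; 0; 2; 2; 0; 0; 1; 1]].
Definition B24_inv : seq (seq nat) := [:: [:: 0; 0; 0; 0; 2; 2; 2; 0; 2; 2; 1; 0; 1; 0; 0; 1; 1; 0; 1; 0; 2; 1; 2; 0]; [:: 0; 0; 2; 2; 1; 0; 2; 1; 2; 2; 0; 0; 1; 0; 2; 2; 0; 0; 0; 2; 1; 1; 1; 0]; [:: 0; 2; 0; 1; 1; 0; 2; 0; 1; 1; 1; 0; 1; 0; 1; 2; 2; 2; 1; 1; 0; 2; 2; 0]; [:: 0; 2; 1; 2; 0; 0; 1; 0; 2; 1; 0; 0; 1; 0; 2; 1; 2; 1; 1; 2; 0; 1; 0; 2]; [:: 2; 1; 1; 0; 1; 2; 2; 1; 1; 1; 1; 1; 1; 0; 2; 1; 2; 1; 0; 1; 1; 0; 2; 0]; [:: 2; 0; 0; 0; 2; 0; 1; 1; 0; 1; 1; 0; 1; 1; 1; 2; 1; 1; 1; 1; 2; 1; 2; 2]; [:: 2; 2; 2; 1; 2; 1; 2; 2; 1; 1; 1; 0; 2; 1; 0; 1; 0; 2; 1; 1; 0; 1; 0; 0]; [:: 0;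 1; 0; 0; 1; 1; 2; 2; 2; 2; 2; 0; 2; 2; 2; 0; 2; 1; 2; 1; 0; 0; 0; 2]; [:: 2; 2; 1; 2; 1; 0; 1; 2; 2; 0; 0; 0; 2; 1; 1; 0; 0; 0; 0; 1; 2; 2; 0; 1]; [:: 2; 2; 1; 1; 1; 1; 1; 2; 0; 1; 0; 0; 2; 0; 1; 2; 1; 1; 0; 1; 2; 2; 0; 0]; [:: 1; 0; 1; 0; 1; 1; 1; 2; 0; 0; 2; 1; 2; 2; 2; 1; 2; 0; 0; 2; 1; 1; 1; 1]; [:: 0; 0; 0; 0; 1; 0; 0; 0; 0; 0; 1; 2; 0; 1; 0; 2; 1; 1; 0; 1; 2; 2; 0; 0]; [:: 1; 1; 1; 1; 1; 1; 2; 2; 2; 2; 2; 0; 0; 1; 0; 1; 0; 0; 2; 1; 1; 2; 1; 0]; [:: 0; 0; 0; 0; 0; 1; 1; 2; 1; 0; 2; 1; 1; 1; 1; 1; 2; 1; 0; 0; 1; 1; 0; 1]; [:: 0; 2; 1; 2; 2; 1; 0; 2; 1; 1; 2; 0; 0; 1; 0; 2; 0; 2; 0; 0; 2; 0; 2; 0]; [:: 1; 2; 2; 1; 1; 2; 1; 0; 0; 2; 1; 2; 1; 1; 2; 0; 1; 0; 1; 2; 2; 0; 0; 1]; [:: 1; 0; 2; 2; 2; 1; 0; 2; 0; 1; 2; 1; 0; 2; 0; 1; 1; 1; 1; 2; 1; 1; 0; 0]; [:: 0; 0; 2; 1; 1; 1; 2; 1; 0; 1; 0; 1; 0; 1; 2;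 0; 1; 1; 0; 1; 0; 0; 1; 0]; [:: 1; 0; 1; 1; 0; 1; 1; 2; 0; 0; 0; 0; 2; 0; 0; 1; 1; 0; 1; 2; 1; 2; 2; 1]; [:: 0; 2; 1; 2; 1; 1; 1; 1; 1; 1; 2; 1; 1; 0; 0; 2; 2; 1; 2; 2; 0; 2; 0; 2]; [:: 2; 1; 0; 0; 1; 2; 0; 0; 2; 2; 1; 2; 1; 1; 2; 2; 1; 0; 1; 0; 0; 2; 0; 1]; [:: 1; 1; 2; 1; 0; 1; 1; 0; 2; 2; 1; 2; 2; 1; 0; 0; 1; 0; 2; 2; 2; 0; 1; 2]; [:: 2; 1; 2; 0; 2; 2; 0; 0; 0; 0; 1; 0; 1; 0; 2; 0; 0; 1; 2; 0; 0; 1; 0; 2]; [:: 0; 0; 0; 2; 0; 2; 0; 2; 1; 0; 1; 0; 0; 1; 0; 1; 0; 0; 1; 2; 1; 2; 2; 1]].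
Definition B24_sq1_inv : seq (seq nat) := [:: [:: 0; 1; 2; 1; 0; 2; 1; 1; 1; 2; 1; 2; 2; 1; 0; 1; 2; 0; 0; 0; 0; 0; 2; 0]; [:: 1; 0; 0; 0; 1; 2; 0; 0; 0; 2; 1; 0; 0; 0; 2; 1; 0; 0; 0; 0; 1; 0; 2; 0]; [:: 2; 0; 1; 0; 2; 0; 1; 1; 1; 1; 2; 0; 2; 1; 0; 1; 0; 2; 2; 0; 1; 2; 0; 1]; [:: 1; 0; 0; 0; 2; 0; 1; 1; 1; 2; 2; 2; 1; 1; 0; 0; 1; 0; 2; 2; 0; 0; 0; 0]; [:: 0; 1; 2; 2; 2; 1; 1; 0; 0; 1; 0; 2; 1; 1; 1; 0; 0; 2; 1; 1; 1; 2; 1; 1]; [:: 2; 2; 0; 0; 1; 2; 2; 1; 1; 0; 2; 1; 2; 2; 2; 0; 0; 1; 1; 1; 0; 0; 1; 2]; [:: 1; 0; 1; 1; 1; 2; 2; 0; 0; 2; 1; 1; 0; 2; 1; 2; 1; 0; 1; 0; 0; 2; 1; 0]; [:: 1; 0; 1; 1; 0; 1; 0; 1; 0; 2; 0; 2; 2; 0; 1; 0; 0; 1; 0; 2; 2; 2; 1; 0]; [:: 1; 0; 1; 1; 0; 1; 0; 0; 1; 0; 2; 0; 2; 1; 2; 2; 2; 0; 0; 0; 2; 2; 2; 2]; [:: 2; 2; 1; 2; 1; 0; 2; 2; 0; 2; 0; 0; 0; 0; 1; 1; 0; 0; 0; 2; 1; 0; 2; 0]; [:: 1; 1; 2; 2;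 0; 2; 1; 0; 2; 0; 2; 1; 0; 1; 1; 2; 1; 0; 1; 0; 2; 1; 0; 2]; [:: 2; 0; 0; 2; 2; 1; 1; 2; 0; 0; 1; 2; 1; 1; 2; 1; 2; 0; 0; 1; 0; 1; 1; 0]; [:: 2; 0; 2; 1; 1; 2; 0; 2; 2; 0; 0; 1; 2; 0; 2; 2; 1; 0; 0; 1; 2; 1; 1; 0]; [:: 1; 0; 1; 1; 1; 2; 2; 0; 1; 0; 1; 1; 0; 0; 2; 0; 0; 1; 0; 2; 2; 0; 2; 2]; [:: 0; 2; 0; 0; 1; 2; 1; 1; 2; 1; 1; 2; 2; 2; 1; 2; 1; 1; 1; 2; 0; 2; 1; 0]; [:: 1; 1; 1; 0; 0; 0; 2; 0; 2; 1; 2; 1; 2; 0; 2; 2; 1; 1; 1; 2; 2; 1; 0; 1]; [:: 2; 0; 0; 1; 0; 0; 1; 0; 2; 0; 1; 2; 1; 0; 1; 1; 2; 2; 0; 2; 2; 2; 2; 2]; [:: 0; 0; 2; 0; 2; 1; 0; 1; 0; 0; 0; 0; 0; 1; 1; 1; 2; 1; 1; 1; 2; 2; 0; 2]; [:: 0; 0; 2; 2; 1; 1; 1; 0; 0; 0; 1; 0; 0; 0; 1; 1; 0; 1; 2; 2; 0; 1; 1; 2]; [:: 0; 0; 0; 2; 1; 1; 0; 2; 0; 2; 0; 1; 1; 2; 2; 2; 2; 1; 2; 2; 2; 2; 2; 2]; [:: 0; 1; 1; 0; 1; 0; 0; 2; 2; 1; 2; 0; 2; 2; 0; 2; 2; 2;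 0; 2; 0; 2; 1; 0]; [:: 0; 0; 2; 0; 2; 0; 2; 2; 2; 0; 1; 1; 1; 0; 2; 1; 2; 2; 1; 2; 2; 1; 0; 0]; [:: 2; 2; 0; 0; 1; 1; 1; 1; 2; 2; 0; 1; 1; 2; 1; 0; 2; 0; 1; 2; 1; 0; 2; 1]; [:: 0; 0; 1; 0; 1; 2; 0; 0; 2; 0; 2; 0; 0; 2; 0; 1; 2; 2; 2; 2; 0; 0; 1; 0]].
Definition B26 : seq (seq nat) := [:: [:: 2; 0; 0; 2; 0; 0; 0; 0; 0; 1; 2; 2; 1; 0; 0; 1; 0; 0; 0; 1; 0; 1; 1; 0; 0; 1]; [:: 0; 1; 0; 0; 2; 1; 0; 2; 1; 1; 1; 2; 0; 0; 0; 1; 2; 0; 2; 0; 0; 0; 1; 0; 1; 0]; [:: 0; 0; 2; 0; 0; 2; 0; 1; 2; 2; 2; 0; 0; 0; 0; 1; 0; 0; 2; 0; 0; 0; 1; 0; 0; 0]; [:: 2; 0; 0; 2; 2; 0; 0; 0; 1; 0; 1; 0; 0; 0; 2; 0; 0; 0; 0; 1; 0; 0; 1; 2; 0; 0]; [:: 0; 2; 0; 2; 2; 0; 0; 0; 0; 0; 0; 0; 0; 0; 0; 1; 2; 2; 0; 0; 0; 2; 0; 1; 0; 1]; [:: 0; 1; 2; 0; 0; 1; 2; 0; 0; 0; 0; 0; 0; 0; 0; 0; 1; 0; 0; 0; 0; 2; 2; 0; 0; 0]; [:: 0; 0; 0; 0; 0; 2; 0; 0; 0; 2; 2; 2; 1;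 1; 0; 0; 0; 2; 2; 0; 0; 0; 2; 1; 1; 0]; [:: 0; 2; 1; 0; 0; 0; 0; 0; 2; 0; 0; 0; 0; 0; 0; 0; 0; 1; 2; 0; 0; 0; 2; 0; 2; 0]; [:: 0; 1; 2; 1; 0; 0; 0; 2; 0; 2; 2; 1; 1; 0; 2; 2; 0; 0; 0; 0; 1; 0; 0; 2; 0; 1]; [:: 1; 1; 2; 0; 0; 0; 2; 0; 2; 0; 0; 1; 0; 0; 0; 2; 1; 0; 1; 2; 1; 0; 2; 0; 0; 0]; [:: 2; 1; 2; 1; 0; 0; 2; 0; 2; 0; 1; 1; 0; 0; 0; 2; 0; 2; 0; 0; 0; 0; 0; 1; 2; 1]; [:: 2; 2; 0; 0; 0; 0; 2; 0; 1; 1; 1; 0; 2; 1; 0; 0; 2; 0; 0; 0; 0; 2; 2; 0; 0; 2]; [:: 1; 0; 0; 0; 0; 0; 1; 0; 1; 0; 0; 2; 0; 0; 0; 1; 0; 0; 2; 2; 1; 0; 0; 0; 0; 2]; [:: 0; 0; 0; 0; 0; 0; 1; 0; 0; 0; 0; 1; 0; 0; 1; 1; 0; 0; 0; 1; 0; 0; 2; 2; 1; 1]; [:: 0; 0; 0; 2; 0; 0; 0; 0; 2; 0; 0; 0; 0; 1; 2; 0; 2; 1; 0; 0; 0; 0; 0; 0; 0; 0]; [:: 1; 1; 1; 0; 1; 0; 0; 0; 2; 2; 2; 0; 1; 1; 0; 0; 0; 2; 0; 2; 1; 2; 1; 0; 0; 0]; [:: 0; 2; 0; 0; 2; 1; 0;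 0; 0; 1; 0; 2; 0; 0; 2; 0; 0; 0; 0; 1; 0; 0; 0; 0; 0; 2]; [:: 0; 0; 0; 0; 2; 0; 2; 1; 0; 0; 2; 0; 0; 0; 1; 2; 0; 0; 1; 1; 1; 0; 2; 0; 1; 0]; [:: 0; 2; 2; 0; 0; 0; 2; 2; 0; 1; 0; 0; 2; 0; 0; 0; 0; 1; 0; 2; 0; 0; 2; 1; 0; 2]; [:: 1; 0; 0; 1; 0; 0; 0; 0; 0; 2; 0; 0; 2; 1; 0; 2; 1; 1; 2; 0; 0; 0; 0; 2; 0; 0]; [:: 0; 0; 0; 0; 0; 0; 0; 0; 1; 1; 0; 0; 1; 0; 0; 1; 0; 1; 0; 0; 2; 1; 0; 1; 0; 0]; [:: 1; 0; 0; 0; 2; 2; 0; 0; 0; 0; 0; 2; 0; 0; 0; 2; 0; 0; 0; 0; 1; 0; 0; 1; 0; 2]; [:: 1; 1; 1; 1; 0; 2; 2; 2; 0; 2; 0; 2; 0; 2; 0; 1; 0; 2; 2; 0; 0; 0; 0; 1; 0; 0]; [:: 0; 0; 0; 2; 1; 0; 1; 0; 2; 0; 1; 0; 0; 2; 0; 0; 0; 0; 1; 2; 1; 1; 1; 0; 1; 0]; [:: 0; 1; 0; 0; 0; 0; 1; 2; 0; 0; 2; 0; 0; 1; 0; 0; 0; 1; 0; 0; 0; 0; 0; 1; 0; 0]; [:: 1; 0; 0; 0; 1; 0; 0; 0; 1; 0; 1; 2; 2; 1; 0; 0; 2; 0; 2; 0; 0; 2; 0; 0; 0; 0]].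
Definition B26_inv : seq (seq nat) := [:: [:: 0; 0; 1; 2; 1; 2; 2; 2; 2; 1; 2; 0; 2; 0; 2; 2; 1; 1; 1; 0; 1; 1; 2; 1; 0; 0]; [:: 0; 1; 2; 2; 0; 2; 1; 0; 0; 2; 1; 2; 0; 2; 1; 0; 1; 2; 1; 1; 1; 2; 2; 1; 0; 1]; [:: 1; 2; 0; 2; 0; 0; 1; 0; 0; 0; 1; 1; 0; 2; 2; 0; 2; 1; 1; 2; 2; 0; 0; 1; 1; 0]; [:: 2; 2; 2; 1; 1; 0; 2; 0; 0; 1; 1; 1; 1; 0; 2; 0; 1; 1; 1; 0; 2; 0; 2; 2; 1; 1]; [:: 1; 0; 0; 1; 0; 2; 0; 2; 2; 1; 1; 2; 0; 1; 1; 1; 2; 2; 2; 1; 2; 2; 2; 0; 2; 1]; [:: 2; 2; 0; 0; 2; 1; 0; 0; 0; 0; 1; 0; 0; 0; 0; 2; 0; 0; 1; 1; 2; 1; 1; 2; 2; 1]; [:: 2; 1; 1; 2; 0; 0; 0; 0; 2; 0; 0; 2; 2; 2; 0; 0; 1; 0; 2; 0; 0; 2; 2; 0; 0; 0]; [:: 2; 0; 0; 0; 2; 0; 0; 0; 1; 0; 1; 1; 0; 1; 1; 1; 2; 0; 1; 1; 2; 0; 2; 0; 1; 0]; [:: 2; 0; 0; 0; 2; 0; 2; 1; 2; 1; 0; 1; 2; 0; 2; 0; 2; 0; 2; 2; 0; 2; 1; 2; 1; 1]; [:: 1; 2; 0; 1; 1; 0; 0; 0; 1; 1; 2; 0; 2;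 1; 2; 2; 2; 2; 2; 1; 2; 0; 1; 0; 2; 0]; [:: 2; 1; 1; 1; 1; 1; 0; 1; 0; 2; 2; 2; 2; 2; 2; 2; 1; 2; 1; 1; 1; 1; 1; 1; 0; 1]; [:: 0; 2; 1; 1; 2; 0; 2; 1; 1; 0; 2; 0; 2; 0; 0; 1; 0; 2; 0; 1; 0; 0; 2; 0; 1; 0]; [:: 2; 0; 0; 1; 0; 0; 2; 0; 2; 2; 2; 2; 0; 0; 2; 0; 0; 2; 2; 0; 0; 2; 2; 1; 2; 1]; [:: 0; 2; 2; 0; 1; 0; 2; 1; 0; 1; 2; 0; 0; 0; 2; 0; 0; 2; 1; 2; 2; 2; 2; 0; 2; 1]; [:: 2; 1; 2; 2; 1; 0; 0; 1; 2; 2; 2; 0; 2; 2; 0; 1; 1; 1; 1; 2; 0; 2; 1; 2; 1; 2]; [:: 2; 0; 0; 0; 1; 2; 0; 1; 0; 2; 2; 1; 0; 0; 1; 2; 1; 2; 0; 0; 1; 0; 0; 1; 2; 1]; [:: 1; 1; 2; 1; 2; 0; 1; 2; 2; 2; 1; 0; 0; 0; 1; 1; 0; 1; 0; 1; 0; 0; 1; 0; 2; 1]; [:: 1; 2; 1; 1; 2; 0; 0; 0; 0; 2; 2; 2; 2; 2; 1; 2; 1; 1; 0; 0; 0; 2; 0; 0; 0; 1]; [:: 1; 1; 1; 1; 2; 1; 2; 1; 2; 2; 1; 0; 2; 1; 1; 0; 0; 0; 1; 2; 2; 1; 1; 1; 2; 1]; [:: 0; 1; 2; 0; 1; 1; 0;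 1; 2; 1; 1; 1; 0; 2; 2; 0; 1; 0; 2; 0; 1; 2; 2; 2; 1; 0]; [:: 1; 1; 2; 2; 2; 2; 0; 2; 0; 2; 1; 0; 0; 2; 0; 1; 0; 0; 2; 1; 0; 1; 0; 0; 2; 2]; [:: 1; 2; 0; 0; 2; 1; 2; 0; 2; 0; 1; 0; 2; 2; 2; 0; 0; 2; 1; 2; 1; 2; 2; 2; 1; 0]; [:: 2; 2; 0; 2; 2; 1; 2; 2; 1; 1; 1; 2; 2; 2; 1; 0; 1; 0; 1; 2; 0; 2; 0; 0; 2; 0]; [:: 1; 1; 1; 2; 0; 2; 0; 0; 2; 0; 1; 0; 1; 0; 2; 1; 0; 0; 1; 2; 0; 2; 0; 0; 0; 1]; [:: 0; 0; 1; 1; 2; 2; 0; 1; 1; 2; 0; 1; 2; 2; 1; 2; 2; 0; 2; 1; 2; 1; 2; 0; 2; 1]; [:: 0; 1; 0; 1; 1; 1; 0; 0; 1; 0; 1; 0; 1; 1; 2; 1; 1; 1; 1; 0; 2; 0; 0; 1; 1; 0]].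
Definition B26_sq1_inv : seq (seq nat) := [:: [:: 2; 2; 2; 2; 0; 2; 1; 1; 2; 2; 2; 1; 2; 2; 1; 0; 2; 1; 0; 1; 1; 0; 2; 2; 1; 2]; [:: 2; 2; 2; 1; 1; 1; 1; 1; 1; 0; 1; 0; 0; 0; 0; 1; 2; 2; 0; 0; 2; 0; 0; 1; 2; 0]; [:: 2; 2; 2; 0; 0; 0; 1; 0; 0; 0; 0; 0; 1; 2; 1; 2; 0; 2; 2; 2; 1; 1; 0; 2; 1; 1]; [:: 2; 1; 0; 1; 1; 2; 2; 2; 1; 1; 2; 2; 2; 0; 1; 0; 1; 0; 2; 0; 0; 0; 0; 1; 1; 1]; [:: 0; 1; 0; 1; 1; 0; 1; 2; 2; 0; 1; 2; 1; 2; 2; 1; 2; 2; 0; 0; 1; 2; 0; 1; 2; 0]; [:: 2; 1; 0; 2; 0; 2; 0; 1; 0; 1; 2; 1; 2; 0; 2; 2; 1; 1; 1; 1; 0; 0; 1; 2; 0; 1]; [:: 1; 1; 1; 2; 1; 0; 0; 0; 0; 2; 0; 0; 1; 1; 1; 0; 2; 2; 2; 2; 0; 0; 1; 0; 0; 0]; [:: 1; 1; 0; 2; 2; 1; 0; 2; 2; 1; 1; 1; 0; 2; 1; 1; 1; 0; 0; 2; 1; 1; 1; 2; 0; 1]; [:: 2; 1; 0; 1; 2; 0; 0; 2; 2; 2; 0; 0; 1; 1; 2; 0; 0; 2; 0; 0; 2; 1; 0; 1; 1; 2]; [:: 2; 0; 0; 1; 0; 1; 2; 1; 2; 1; 2;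 2; 0; 0; 0; 2; 0; 1; 1; 1; 1; 2; 1; 1; 1; 0]; [:: 2; 1; 0; 2; 1; 2; 0; 1; 0; 2; 2; 0; 0; 1; 1; 0; 0; 1; 2; 0; 2; 0; 2; 2; 1; 1]; [:: 1; 0; 0; 2; 2; 1; 0; 1; 0; 2; 0; 0; 1; 1; 0; 0; 2; 1; 2; 0; 0; 1; 1; 1; 1; 2]; [:: 2; 0; 1; 2; 1; 2; 1; 0; 1; 0; 0; 1; 0; 0; 0; 2; 1; 1; 2; 2; 2; 2; 2; 0; 2; 2]; [:: 2; 0; 2; 0; 2; 0; 1; 2; 1; 0; 1; 1; 0; 1; 0; 2; 1; 0; 1; 1; 0; 2; 1; 0; 2; 1]; [:: 1; 0; 1; 1; 2; 2; 1; 1; 2; 0; 1; 0; 0; 0; 1; 2; 2; 2; 0; 2; 0; 0; 0; 1; 2; 1]; [:: 0; 1; 2; 0; 1; 2; 0; 1; 0; 2; 0; 0; 2; 2; 2; 2; 2; 2; 0; 2; 0; 0; 2; 2; 0; 1]; [:: 2; 2; 0; 1; 2; 1; 2; 1; 0; 0; 0; 2; 1; 1; 2; 2; 2; 1; 2; 2; 1; 0; 1; 2; 1; 1]; [:: 1; 2; 2; 0; 2; 1; 2; 0; 2; 1; 1; 1; 1; 0; 2; 2; 1; 2; 0; 0; 1; 0; 0; 0; 2; 2]; [:: 0; 0; 2; 2; 0; 1; 2; 0; 0; 1; 2; 2; 2; 1; 0; 0; 2; 0; 0; 2; 1; 1; 1; 0; 2; 0]; [:: 1; 0; 2; 0; 0;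 1; 2; 2; 0; 1; 0; 0; 2; 1; 2; 2; 2; 0; 2; 2; 0; 0; 1; 2; 0; 2]; [:: 1; 2; 1; 0; 1; 0; 0; 1; 2; 1; 2; 0; 2; 0; 0; 0; 1; 1; 1; 0; 1; 2; 1; 1; 2; 2]; [:: 0; 0; 1; 0; 2; 0; 0; 1; 1; 2; 0; 1; 2; 2; 0; 0; 0; 0; 1; 0; 2; 1; 0; 2; 1; 2]; [:: 2; 0; 0; 0; 0; 1; 1; 1; 0; 1; 2; 1; 2; 1; 0; 2; 1; 0; 1; 1; 1; 0; 2; 0; 0; 0]; [:: 2; 1; 2; 1; 1; 2; 0; 2; 1; 1; 2; 1; 0; 0; 1; 2; 2; 0; 0; 2; 1; 2; 0; 0; 2; 2]; [:: 1; 2; 1; 1; 2; 0; 0; 0; 1; 1; 1; 1; 2; 2; 2; 0; 1; 2; 2; 0; 2; 1; 0; 2; 2; 2]; [:: 2; 0; 1; 1; 0; 1; 0; 1; 2; 0; 1; 2; 2; 1; 1; 1; 1; 2; 0; 2; 2; 2; 0; 2; 2; 2]].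
Definition B28 : seq (seq nat) := [:: [:: 1; 1; 2; 0; 0; 2; 2; 1; 2; 0; 1; 0; 0; 0; 1; 0; 0; 0; 0; 0; 0; 0; 1; 0; 0; 1; 0; 0]; [:: 1; 0; 1; 1; 1; 1; 1; 1; 1; 0; 2; 0; 0; 0; 0; 2; 2; 2; 0; 0; 1; 0; 0; 0; 1; 0; 0; 0]; [:: 2; 1; 2; 1; 0; 1; 0; 0; 0; 2; 1; 1; 0; 0; 0; 1; 2; 0; 1; 0; 0; 0; 2; 0; 0; 1; 0; 2]; [:: 0; 1; 1; 0; 0; 2; 0; 0; 2; 0; 2; 2; 0; 0; 2; 0; 0; 0; 2; 2; 2; 0; 0; 2; 0; 2; 0; 1]; [:: 0; 1; 0; 0; 1; 1; 0; 0; 2; 1; 0; 0; 1; 2; 2; 2; 2; 2; 2; 0; 0; 2; 2; 2; 0; 0; 2; 0]; [:: 2; 1; 1; 2; 1; 0; 0; 2; 0; 1; 0; 0; 0; 2; 0; 0; 0; 0; 1; 0; 2; 0; 0; 0; 1; 0; 2; 0]; [:: 2; 1; 0; 0; 0; 0; 1; 1; 0; 0; 0; 0; 2; 0; 0; 0; 1; 0; 0; 1; 0; 0; 2; 2; 2; 0; 1; 0]; [:: 1; 1; 0; 0; 0; 2; 1; 0; 0; 1; 1; 0; 2; 1; 0; 0; 1; 2; 2; 1; 0; 0; 0; 1; 0; 0; 1; 2]; [:: 2; 1; 0; 2; 2; 0; 0; 0; 0; 0; 0; 2; 0; 0; 0; 0; 0; 1; 0; 0; 0; 0; 2; 2; 0;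 0; 0; 0]; [:: 0; 0; 2; 0; 1; 1; 0; 1; 0; 0; 0; 2; 1; 0; 0; 0; 1; 2; 2; 0; 2; 0; 1; 0; 1; 0; 1; 1]; [:: 1; 2; 1; 2; 0; 0; 0; 1; 0; 0; 0; 0; 0; 0; 0; 0; 2; 0; 0; 1; 2; 0; 0; 0; 0; 2; 0; 1]; [:: 0; 0; 1; 2; 0; 0; 0; 0; 2; 2; 0; 0; 1; 0; 1; 0; 0; 0; 1; 0; 2; 1; 0; 0; 2; 1; 0; 1]; [:: 0; 0; 0; 0; 1; 0; 2; 2; 0; 1; 0; 1; 0; 1; 0; 0; 0; 0; 2; 1; 0; 0; 0; 0; 0; 2; 1; 1]; [:: 0; 0; 0; 0; 2; 2; 0; 1; 0; 0; 0; 0; 1; 1; 0; 0; 0; 2; 2; 2; 0; 0; 0; 2; 1; 0; 2; 1]; [:: 1; 0; 0; 2; 2; 0; 0; 0; 0; 0; 0; 1; 0; 0; 0; 1; 1; 1; 0; 1; 1; 2; 2; 2; 0; 0; 0; 0]; [:: 0; 2; 1; 0; 2; 0; 0; 0; 0; 0; 0; 0; 0; 0; 1; 2; 0; 1; 0; 0; 2; 0; 1; 1; 0; 0; 0; 1]; [:: 0; 2; 2; 0; 2; 0; 1; 1; 0; 1; 2; 0; 0; 0; 1; 0; 2; 1; 0; 0; 0; 0; 0; 0; 0; 1; 2; 0]; [:: 0; 2; 0; 0; 2; 0; 0; 2; 1; 2; 0; 0; 0; 2; 1; 1; 1; 2; 0; 2; 2; 1; 0; 2; 0; 2; 0; 0];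 [:: 0; 0; 1; 2; 2; 1; 0; 2; 0; 2; 0; 1; 2; 2; 0; 0; 0; 0; 2; 0; 0; 1; 0; 0; 2; 1; 0; 0]; [:: 0; 0; 0; 2; 0; 0; 1; 1; 0; 0; 1; 0; 1; 2; 1; 0; 0; 2; 0; 0; 0; 2; 0; 0; 0; 0; 2; 0]; [:: 0; 1; 0; 2; 0; 2; 0; 0; 0; 2; 2; 2; 0; 0; 1; 2; 0; 2; 0; 0; 2; 1; 1; 0; 2; 0; 0; 2]; [:: 0; 0; 0; 0; 2; 0; 0; 0; 0; 0; 0; 1; 0; 0; 2; 0; 0; 1; 1; 2; 1; 0; 0; 0; 0; 0; 0; 0]; [:: 1; 0; 2; 0; 2; 0; 2; 0; 2; 1; 0; 0; 0; 0; 2; 1; 0; 0; 0; 0; 1; 0; 1; 0; 2; 0; 1; 0]; [:: 0; 0; 0; 2; 2; 0; 2; 1; 2; 0; 0; 0; 0; 2; 2; 1; 0; 2; 0; 0; 0; 0; 0; 2; 2; 0; 0; 0]; [:: 0; 1; 0; 0; 0; 1; 2; 0; 0; 1; 0; 2; 0; 1; 0; 0; 0; 0; 2; 0; 2; 0; 2; 2; 1; 0; 1; 1]; [:: 1; 0; 1; 2; 0; 0; 0; 0; 0; 0; 2; 1; 2; 0; 0; 0; 1; 2; 1; 0; 0; 0; 0; 0; 0; 2; 0; 2]; [:: 0; 0; 0; 0; 2; 2; 1; 1; 0; 1; 0; 0; 1; 2; 0; 0; 2; 0; 0; 2; 0; 0; 1; 0; 1; 0; 0; 2]; [:: 0; 0;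 2; 1; 0; 0; 0; 2; 0; 1; 1; 1; 1; 1; 0; 1; 0; 0; 0; 0; 2; 0; 0; 0; 1; 2; 2; 0]].
Definition B28_inv : seq (seq nat) := [:: [:: 0; 2; 1; 0; 1; 0; 2; 0; 1; 2; 1; 2; 0; 1; 1; 0; 1; 0; 2; 1; 2; 0; 0; 2; 1; 1; 0; 1]; [:: 2; 2; 0; 1; 0; 1; 0; 0; 1; 1; 2; 0; 1; 0; 2; 2; 0; 2; 1; 2; 1; 1; 0; 1; 1; 0; 1; 0]; [:: 1; 0; 0; 0; 2; 1; 1; 1; 2; 0; 1; 0; 1; 2; 1; 0; 2; 0; 0; 1; 1; 0; 1; 2; 0; 2; 0; 2]; [:: 0; 1; 0; 1; 1; 1; 0; 0; 2; 0; 2; 2; 2; 2; 0; 2; 2; 1; 1; 1; 1; 0; 1; 0; 1; 2; 0; 0]; [:: 1; 0; 2; 1; 1; 0; 2; 1; 1; 1; 1; 1; 1; 2; 1; 2; 2; 2; 2; 1; 1; 1; 2; 2; 0; 2; 0; 1]; [:: 0; 1; 1; 1; 0; 2; 1; 0; 1; 0; 1; 1; 0; 2; 0; 2; 2; 0; 1; 1; 2; 2; 2; 0; 0; 1; 0; 2]; [:: 2; 0; 1; 0; 2; 1; 2; 2; 1; 2; 1; 2; 1; 0; 2; 2; 0; 0; 2; 2; 2; 2; 2; 1; 2; 2; 0; 0]; [:: 0; 0; 1; 0; 1; 0; 2; 1; 0; 2; 1; 2; 0; 2; 0; 1; 0; 2; 2; 1; 2; 2; 1; 1; 0; 0; 1;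 2]; [:: 1; 1; 2; 2; 1; 1; 1; 0; 2; 1; 1; 1; 1; 1; 2; 0; 0; 2; 1; 1; 0; 2; 1; 2; 2; 0; 1; 2]; [:: 2; 1; 0; 0; 1; 0; 2; 2; 1; 1; 0; 2; 0; 0; 0; 2; 2; 1; 0; 0; 1; 0; 0; 0; 2; 1; 0; 1]; [:: 1; 2; 1; 2; 1; 1; 1; 1; 1; 0; 1; 2; 0; 2; 2; 0; 0; 1; 1; 0; 2; 0; 0; 0; 0; 0; 0; 1]; [:: 2; 0; 0; 2; 1; 1; 2; 2; 1; 2; 2; 2; 2; 2; 1; 0; 1; 0; 0; 1; 1; 2; 0; 2; 0; 0; 0; 2]; [:: 0; 1; 1; 2; 1; 0; 1; 0; 1; 0; 0; 2; 1; 0; 0; 2; 1; 1; 2; 1; 0; 1; 2; 1; 1; 0; 1; 2]; [:: 1; 0; 2; 2; 2; 2; 0; 2; 1; 0; 2; 2; 0; 2; 1; 0; 1; 0; 2; 0; 2; 0; 0; 2; 1; 2; 1; 2]; [:: 1; 2; 1; 0; 1; 0; 2; 0; 2; 0; 2; 1; 0; 1; 2; 2; 0; 0; 1; 2; 0; 2; 2; 0; 0; 2; 0; 0]; [:: 0; 2; 0; 2; 2; 2; 2; 1; 0; 2; 0; 0; 2; 0; 2; 1; 1; 1; 2; 1; 2; 0; 1; 1; 1; 1; 1; 0]; [:: 1; 0; 2; 2; 2; 2; 0; 0; 0; 2; 0; 1; 1; 1; 0; 1; 2; 1; 1; 2; 1; 1; 0; 1; 0; 0; 2; 0]; [:: 0;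 2; 0; 1; 2; 0; 0; 2; 2; 1; 1; 0; 1; 0; 0; 1; 1; 1; 2; 0; 2; 2; 1; 2; 1; 2; 0; 0]; [:: 2; 1; 0; 1; 2; 1; 2; 2; 1; 0; 1; 0; 2; 2; 1; 2; 1; 2; 2; 0; 2; 2; 1; 0; 2; 2; 1; 0]; [:: 1; 2; 1; 1; 1; 1; 2; 1; 1; 0; 0; 1; 1; 0; 2; 1; 2; 0; 0; 0; 2; 1; 1; 0; 1; 1; 0; 2]; [:: 2; 1; 1; 1; 1; 2; 2; 2; 0; 1; 2; 1; 0; 2; 0; 2; 1; 2; 2; 2; 1; 2; 0; 1; 1; 1; 2; 1]; [:: 0; 1; 0; 0; 1; 2; 2; 2; 2; 0; 0; 2; 1; 0; 2; 0; 1; 2; 2; 1; 2; 1; 2; 1; 1; 2; 1; 0]; [:: 0; 0; 1; 1; 2; 2; 2; 1; 1; 0; 0; 0; 2; 0; 2; 1; 0; 1; 1; 1; 0; 2; 0; 1; 1; 0; 0; 1]; [:: 2; 1; 2; 0; 2; 0; 1; 1; 2; 0; 0; 2; 1; 2; 0; 1; 1; 2; 0; 0; 1; 1; 1; 2; 2; 0; 1; 1]; [:: 1; 1; 0; 1; 0; 0; 2; 0; 2; 2; 0; 0; 1; 1; 0; 1; 0; 1; 2; 1; 1; 1; 1; 2; 1; 1; 2; 2]; [:: 1; 0; 2; 2; 2; 1; 2; 0; 0; 1; 0; 0; 0; 2; 2; 1; 0; 2; 2; 1; 1; 2; 0; 0; 1; 2; 2; 1]; [:: 0; 1; 0; 0;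 0; 0; 0; 1; 1; 0; 0; 0; 1; 1; 0; 1; 2; 0; 1; 0; 2; 1; 0; 1; 2; 2; 0; 0]; [:: 1; 0; 2; 0; 1; 2; 0; 2; 2; 1; 1; 2; 2; 2; 0; 0; 0; 0; 0; 2; 1; 0; 1; 1; 2; 1; 0; 1]].
Definition B28_sq1_inv : seq (seq nat) := [:: [:: 2; 1; 2; 1; 0; 0; 1; 2; 1; 0; 2; 2; 0; 1; 0; 0; 0; 2; 2; 2; 1; 1; 1; 1; 1; 1; 2; 2]; [:: 1; 0; 0; 0; 0; 0; 0; 2; 1; 0; 2; 0; 2; 0; 2; 1; 0; 0; 0; 0; 2; 2; 2; 2; 2; 2; 1; 2]; [:: 2; 0; 0; 2; 0; 1; 1; 1; 1; 0; 2; 2; 0; 1; 0; 1; 1; 1; 2; 2; 2; 2; 2; 2; 1; 1; 1; 2]; [:: 1; 0; 2; 1; 2; 2; 2; 0; 2; 1; 0; 2; 1; 0; 0; 2; 1; 0; 0; 0; 2; 1; 1; 0; 1; 2; 2; 1]; [:: 0; 0; 0; 2; 2; 0; 1; 0; 1; 1; 1; 1; 1; 1; 1; 2; 1; 0; 1; 1; 0; 1; 2; 1; 1; 0; 2; 1]; [:: 0; 0; 1; 2; 0; 0; 1; 2; 2; 1; 0; 1; 2; 1; 1; 2; 1; 1; 1; 0; 0; 2; 0; 2; 1; 1; 2; 1]; [:: 1; 0; 1; 2; 1; 1; 0; 0; 2; 2; 2; 2; 0; 0; 2; 1; 0; 1; 2; 1; 0; 0; 2; 2; 2; 0; 1; 2];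 [:: 2; 2; 1; 0; 0; 2; 0; 2; 0; 1; 0; 0; 1; 1; 2; 2; 2; 2; 0; 0; 1; 1; 0; 1; 0; 1; 1; 1]; [:: 1; 1; 1; 2; 1; 2; 2; 0; 2; 0; 2; 1; 2; 2; 1; 1; 0; 0; 2; 2; 2; 0; 1; 0; 0; 0; 2; 2]; [:: 0; 0; 0; 1; 1; 1; 2; 1; 0; 2; 2; 1; 1; 2; 2; 0; 0; 1; 2; 2; 0; 0; 1; 2; 0; 2; 2; 1]; [:: 2; 2; 2; 0; 1; 0; 2; 0; 2; 2; 1; 0; 0; 0; 0; 0; 0; 2; 0; 2; 0; 2; 0; 0; 1; 1; 0; 0]; [:: 2; 0; 2; 2; 1; 1; 2; 0; 1; 1; 0; 1; 2; 2; 2; 2; 1; 2; 0; 2; 0; 1; 2; 1; 2; 1; 0; 1]; [:: 0; 2; 0; 1; 1; 2; 0; 1; 2; 1; 0; 2; 1; 1; 1; 2; 2; 2; 1; 1; 2; 0; 0; 0; 2; 0; 1; 1]; [:: 1; 0; 1; 0; 1; 1; 0; 1; 2; 2; 0; 2; 1; 0; 1; 2; 2; 0; 1; 1; 1; 2; 0; 2; 1; 1; 2; 2]; [:: 0; 2; 0; 0; 1; 1; 2; 2; 1; 2; 0; 2; 1; 1; 0; 1; 1; 0; 0; 0; 2; 0; 0; 2; 0; 2; 1; 2]; [:: 0; 1; 1; 2; 2; 2; 1; 2; 1; 0; 0; 2; 2; 2; 1; 2; 2; 2; 1; 0; 0; 0; 0; 0; 0; 1; 1; 1]; [:: 0; 0;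 1; 1; 1; 1; 0; 2; 0; 0; 0; 1; 2; 2; 1; 2; 2; 2; 1; 1; 1; 1; 2; 1; 2; 2; 2; 0]; [:: 2; 0; 1; 0; 0; 1; 1; 2; 0; 1; 2; 2; 2; 0; 0; 2; 2; 1; 1; 2; 0; 0; 0; 1; 1; 0; 0; 1]; [:: 2; 0; 2; 0; 1; 1; 2; 0; 2; 2; 0; 0; 1; 1; 0; 1; 1; 1; 2; 1; 0; 1; 1; 2; 0; 0; 0; 0]; [:: 2; 0; 2; 0; 1; 0; 1; 0; 2; 2; 2; 2; 1; 1; 0; 0; 1; 2; 1; 1; 0; 2; 0; 2; 2; 2; 1; 0]; [:: 1; 2; 2; 2; 0; 0; 0; 1; 2; 0; 0; 0; 2; 1; 2; 0; 1; 0; 0; 0; 0; 0; 2; 0; 2; 0; 1; 2]; [:: 1; 2; 2; 1; 1; 2; 0; 1; 0; 0; 2; 1; 0; 2; 0; 0; 1; 0; 1; 2; 0; 0; 0; 0; 1; 0; 0; 0]; [:: 1; 2; 2; 1; 2; 0; 2; 0; 1; 1; 0; 2; 0; 0; 0; 0; 2; 0; 1; 0; 2; 0; 1; 1; 2; 2; 1; 2]; [:: 1; 2; 2; 0; 1; 2; 2; 1; 0; 2; 0; 1; 0; 2; 2; 0; 1; 1; 2; 2; 0; 0; 1; 2; 1; 2; 1; 0]; [:: 1; 2; 1; 1; 1; 1; 2; 0; 0; 0; 1; 2; 2; 1; 0; 0; 2; 1; 0; 2; 2; 1; 2; 1; 0; 0; 1; 0]; [:: 1; 2; 1; 2; 0;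 1; 0; 1; 0; 2; 1; 1; 0; 1; 2; 1; 2; 0; 0; 2; 0; 0; 2; 2; 0; 2; 0; 0]; [:: 2; 1; 1; 2; 2; 2; 1; 1; 2; 2; 0; 0; 1; 2; 1; 1; 2; 0; 0; 1; 1; 0; 1; 1; 1; 0; 1; 0]; [:: 2; 2; 2; 1; 1; 1; 2; 1; 2; 1; 0; 1; 1; 2; 2; 1; 0; 1; 0; 0; 2; 0; 2; 0; 0; 0; 0; 1]].
Definition B30 : seq (seq nat) := [:: [:: 0; 0; 1; 0; 0; 0; 0; 1; 0; 2; 1; 2; 2; 2; 1; 0; 2; 1; 1; 1; 1; 2; 0; 0; 0; 0; 0; 2; 0; 0]; [:: 0; 0; 0; 1; 1; 0; 0; 2; 1; 0; 1; 0; 0; 0; 0; 1; 2; 0; 0; 2; 0; 0; 0; 0; 2; 2; 0; 0; 0; 1]; [:: 1; 0; 0; 0; 0; 0; 2; 0; 2; 1; 2; 2; 0; 0; 0; 1; 0; 0; 0; 0; 0; 1; 1; 1; 2; 2; 0; 1; 0; 0]; [:: 0; 1; 0; 2; 0; 2; 1; 2; 2; 0; 0; 2; 1; 2; 1; 0; 0; 2; 0; 0; 0; 1; 2; 1; 1; 0; 0; 0; 0; 0]; [:: 0; 1; 0; 0; 1; 0; 0; 0; 2; 0; 0; 0; 0; 0; 0; 0; 2; 0; 2; 0; 1; 0; 0; 0; 0; 0; 0; 0; 0; 2]; [:: 0; 0; 0; 2; 0; 0; 0; 1; 0; 0; 0; 0; 0; 2; 0; 2; 1; 2; 0; 0; 1;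 0; 2; 0; 0; 1; 2; 0; 1; 1]; [:: 0; 0; 2; 1; 0; 0; 0; 2; 0; 2; 0; 2; 2; 2; 0; 0; 2; 0; 0; 0; 2; 0; 2; 0; 0; 0; 0; 0; 0; 0]; [:: 1; 2; 0; 2; 0; 1; 2; 1; 2; 0; 0; 2; 2; 0; 0; 0; 0; 1; 0; 1; 2; 2; 0; 0; 0; 1; 2; 0; 1; 0]; [:: 0; 1; 2; 2; 2; 0; 0; 2; 0; 1; 0; 0; 1; 1; 1; 0; 2; 2; 2; 0; 1; 2; 0; 1; 2; 0; 0; 0; 0; 0]; [:: 2; 0; 1; 0; 0; 0; 2; 0; 1; 2; 2; 1; 0; 0; 1; 0; 0; 2; 0; 0; 0; 0; 1; 0; 0; 2; 0; 0; 0; 0]; [:: 1; 1; 2; 0; 0; 0; 0; 0; 0; 2; 1; 2; 1; 0; 0; 1; 0; 1; 2; 0; 0; 0; 0; 1; 0; 0; 0; 0; 2; 0]; [:: 2; 0; 2; 2; 0; 0; 2; 2; 0; 1; 2; 2; 0; 0; 0; 2; 1; 0; 0; 1; 2; 2; 1; 0; 0; 0; 0; 0; 0; 1]; [:: 2; 0; 0; 1; 0; 0; 2; 2; 1; 0; 1; 0; 0; 0; 1; 1; 0; 0; 1; 0; 0; 1; 0; 1; 2; 0; 2; 1; 0; 1]; [:: 2; 0; 0; 2; 0; 2; 2; 0; 1; 0; 0; 0; 0; 0; 1; 0; 1; 0; 0; 0; 0; 0; 1; 1; 0; 0; 2; 2; 0; 0]; [:: 1; 0; 0; 1; 0; 0;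 0; 0; 1; 1; 0; 0; 1; 1; 0; 0; 0; 2; 2; 1; 1; 2; 0; 1; 1; 1; 1; 0; 0; 2]; [:: 0; 1; 1; 0; 0; 2; 0; 0; 0; 0; 1; 2; 1; 0; 0; 1; 1; 0; 2; 0; 1; 0; 0; 0; 2; 0; 0; 0; 2; 0]; [:: 2; 2; 0; 0; 2; 1; 2; 0; 2; 0; 0; 1; 0; 1; 0; 1; 0; 0; 2; 1; 1; 1; 0; 0; 0; 0; 0; 0; 0; 0]; [:: 1; 0; 0; 2; 0; 2; 0; 1; 2; 2; 1; 0; 0; 0; 2; 0; 0; 0; 0; 0; 2; 0; 0; 2; 0; 1; 2; 1; 0; 0]; [:: 1; 0; 0; 0; 2; 0; 0; 0; 2; 0; 2; 0; 1; 0; 2; 2; 2; 0; 0; 0; 0; 1; 1; 0; 2; 2; 1; 1; 0; 0]; [:: 1; 2; 0; 0; 0; 0; 0; 1; 0; 0; 0; 1; 0; 0; 1; 0; 1; 0; 0; 0; 0; 0; 0; 0; 2; 1; 0; 0; 1; 1]; [:: 1; 0; 0; 0; 1; 1; 2; 2; 1; 0; 0; 2; 0; 0; 1; 1; 1; 2; 0; 0; 2; 0; 1; 1; 2; 1; 0; 2; 1; 0]; [:: 2; 0; 1; 1; 0; 0; 0; 2; 2; 0; 0; 2; 1; 0; 2; 0; 1; 0; 1; 0; 0; 0; 0; 2; 0; 0; 1; 2; 2; 2]; [:: 0; 0; 1; 2; 0; 2; 2; 0; 0; 1; 0; 1; 0; 1; 0; 0; 0; 0; 1; 0; 1; 0;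 0; 0; 1; 0; 2; 2; 2; 0]; [:: 0; 0; 1; 1; 0; 0; 0; 0; 1; 0; 1; 0; 1; 1; 1; 0; 0; 2; 0; 0; 1; 2; 0; 0; 2; 0; 0; 0; 2; 0]; [:: 0; 2; 2; 1; 0; 0; 0; 0; 2; 0; 0; 0; 2; 0; 1; 2; 0; 0; 2; 2; 2; 0; 1; 2; 2; 0; 0; 0; 1; 2]; [:: 0; 2; 2; 0; 0; 1; 0; 1; 0; 2; 0; 0; 0; 0; 1; 0; 0; 1; 2; 1; 1; 0; 0; 0; 0; 0; 0; 0; 0; 0]; [:: 0; 0; 0; 0; 0; 2; 0; 2; 0; 0; 0; 0; 2; 2; 1; 0; 0; 2; 1; 0; 0; 1; 2; 0; 0; 0; 0; 0; 0; 0]; [:: 2; 0; 1; 0; 0; 0; 0; 0; 0; 0; 0; 0; 1; 2; 0; 0; 0; 1; 1; 0; 2; 2; 2; 0; 0; 0; 0; 0; 0; 0]; [:: 0; 0; 0; 0; 0; 1; 0; 1; 0; 0; 2; 0; 0; 0; 0; 2; 0; 0; 0; 1; 1; 2; 2; 2; 1; 0; 0; 0; 0; 1]; [:: 0; 1; 0; 0; 2; 1; 0; 0; 0; 0; 0; 1; 1; 0; 2; 0; 0; 0; 0; 1; 0; 2; 0; 0; 2; 0; 0; 0; 1; 1]].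
Definition B30_inv : seq (seq nat) := [:: [:: 2; 2; 0; 1; 2; 1; 1; 2; 1; 1; 1; 0; 1; 1; 0; 0; 1; 2; 0; 1; 0; 2; 1; 1; 2; 1; 0; 2; 2; 2]; [:: 2; 1; 0; 1; 2; 2; 2; 1; 0; 2; 2; 1; 2; 2; 1; 1; 0; 0; 0; 2; 0; 2; 2; 1; 0; 2; 0; 0; 0; 0]; [:: 0; 0; 0; 1; 2; 0; 2; 1; 0; 2; 2; 2; 1; 1; 1; 1; 1; 1; 2; 2; 2; 1; 0; 0; 1; 2; 2; 0; 2; 1]; [:: 1; 1; 1; 0; 2; 2; 0; 0; 2; 0; 2; 0; 2; 2; 0; 0; 2; 1; 1; 1; 2; 0; 0; 1; 1; 2; 0; 2; 0; 0]; [:: 2; 2; 2; 2; 1; 0; 0; 0; 0; 1; 1; 2; 0; 1; 0; 1; 2; 2; 0; 1; 2; 1; 1; 0; 2; 2; 1; 1; 0; 2]; [:: 1; 2; 0; 2; 0; 0; 1; 1; 0; 0; 0; 2; 0; 0; 2; 0; 1; 1; 2; 2; 1; 1; 0; 0; 0; 1; 0; 2; 0; 0]; [:: 1; 2; 2; 0; 0; 1; 0; 2; 0; 0; 2; 2; 1; 1; 2; 0; 1; 2; 1; 0; 1; 2; 1; 1; 1; 2; 1; 2; 1; 1]; [:: 2; 1; 1; 0; 0; 1; 2; 0; 2; 0; 0; 0; 0; 2; 1; 1; 0; 2; 0; 2; 2; 2; 1; 2; 0; 2; 0; 1; 1; 1]; [:: 1; 0; 0; 2; 0; 0; 0; 2;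 1; 1; 1; 0; 1; 2; 2; 1; 2; 0; 1; 1; 0; 2; 0; 0; 2; 0; 0; 2; 2; 2]; [:: 1; 2; 2; 0; 1; 0; 0; 0; 1; 0; 0; 1; 0; 2; 1; 0; 0; 1; 1; 1; 2; 0; 2; 1; 0; 1; 2; 2; 1; 0]; [:: 1; 2; 2; 2; 1; 0; 2; 0; 1; 0; 1; 2; 1; 0; 2; 2; 2; 0; 0; 0; 2; 1; 2; 0; 2; 2; 1; 1; 2; 2]; [:: 0; 1; 2; 0; 2; 2; 2; 0; 0; 1; 2; 2; 2; 0; 2; 1; 0; 1; 1; 0; 0; 1; 2; 0; 2; 2; 1; 2; 1; 2]; [:: 1; 2; 1; 2; 0; 0; 1; 0; 1; 0; 1; 2; 2; 1; 0; 2; 0; 0; 1; 0; 1; 0; 1; 0; 2; 2; 2; 2; 1; 1]; [:: 1; 2; 1; 2; 1; 0; 1; 2; 2; 2; 0; 0; 1; 0; 2; 1; 1; 1; 2; 1; 1; 0; 0; 0; 1; 0; 0; 0; 1; 2]; [:: 0; 1; 1; 0; 0; 2; 2; 1; 2; 1; 2; 2; 0; 2; 0; 2; 0; 1; 0; 1; 1; 1; 1; 0; 1; 0; 1; 1; 2; 0]; [:: 0; 1; 1; 0; 1; 0; 0; 1; 1; 0; 2; 1; 2; 1; 2; 1; 1; 0; 1; 1; 2; 1; 0; 1; 0; 0; 1; 1; 1; 1]; [:: 1; 0; 1; 2; 2; 1; 1; 0; 2; 0; 2; 0; 0; 1; 0; 1; 1; 2; 1; 0; 2; 0; 0; 2;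 2; 0; 0; 0; 0; 0]; [:: 2; 0; 1; 1; 2; 1; 2; 2; 0; 1; 0; 1; 0; 1; 1; 0; 2; 2; 0; 2; 0; 1; 2; 1; 2; 1; 1; 2; 2; 0]; [:: 0; 0; 2; 1; 0; 2; 1; 0; 1; 1; 0; 1; 1; 2; 0; 1; 1; 0; 2; 2; 1; 1; 1; 2; 0; 0; 1; 0; 1; 0]; [:: 1; 2; 2; 1; 1; 2; 0; 2; 1; 1; 0; 0; 0; 1; 1; 1; 0; 2; 2; 1; 2; 0; 2; 1; 1; 2; 0; 1; 2; 2]; [:: 0; 0; 2; 2; 2; 1; 1; 2; 0; 2; 2; 0; 1; 1; 1; 2; 2; 0; 1; 2; 2; 2; 2; 0; 0; 0; 0; 1; 0; 1]; [:: 2; 2; 1; 0; 1; 1; 2; 2; 2; 0; 1; 1; 0; 0; 1; 1; 0; 1; 1; 0; 2; 2; 0; 0; 0; 2; 1; 0; 1; 2]; [:: 1; 2; 0; 0; 1; 0; 1; 1; 0; 2; 2; 2; 1; 0; 1; 0; 0; 2; 1; 2; 2; 0; 1; 2; 2; 2; 2; 0; 2; 1]; [:: 1; 1; 0; 1; 0; 0; 1; 2; 0; 1; 0; 0; 0; 0; 0; 1; 2; 1; 2; 1; 0; 0; 2; 2; 2; 1; 0; 0; 0; 0]; [:: 2; 0; 1; 1; 2; 0; 1; 0; 2; 0; 2; 2; 2; 1; 1; 0; 2; 2; 0; 1; 0; 0; 2; 2; 1; 1; 2; 0; 1; 1]; [:: 1; 2; 2; 2; 2; 1; 2; 2; 0;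 1; 2; 2; 2; 0; 0; 0; 0; 1; 0; 2; 0; 2; 2; 1; 1; 2; 1; 2; 1; 1]; [:: 0; 0; 2; 0; 1; 0; 1; 0; 0; 2; 1; 1; 2; 0; 1; 1; 0; 1; 1; 0; 0; 1; 2; 0; 2; 1; 2; 0; 2; 0]; [:: 2; 0; 0; 2; 1; 2; 2; 1; 2; 2; 1; 2; 2; 0; 1; 1; 0; 2; 0; 1; 1; 0; 0; 0; 0; 2; 0; 1; 1; 0]; [:: 2; 0; 2; 0; 0; 0; 1; 1; 2; 1; 2; 1; 1; 1; 2; 1; 0; 2; 1; 2; 0; 1; 2; 0; 1; 1; 2; 1; 0; 0]; [:: 2; 0; 1; 0; 2; 0; 1; 1; 2; 0; 2; 2; 1; 2; 0; 1; 0; 0; 0; 2; 1; 2; 1; 0; 1; 1; 0; 0; 0; 1]].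
Definition B30_sq1_inv : seq (seq nat) := [:: [:: 1; 1; 0; 1; 2; 1; 1; 1; 1; 0; 2; 1; 1; 1; 2; 1; 1; 2; 2; 1; 0; 2; 0; 2; 2; 1; 2; 0; 2; 2]; [:: 1; 1; 0; 2; 0; 0; 2; 0; 0; 0; 2; 0; 0; 1; 0; 2; 0; 1; 2; 1; 2; 0; 0; 0; 1; 0; 0; 1; 2; 2]; [:: 0; 0; 2; 2; 2; 0; 2; 1; 2; 2; 0; 0; 0; 2; 0; 0; 1; 2; 1; 0; 0; 0; 0; 2; 1; 2; 1; 0; 0; 1]; [:: 1; 2; 2; 2; 0; 2; 1; 2; 1; 1; 0; 0; 0; 2; 2; 1; 0; 0; 2; 1; 2; 1; 0; 1; 2; 0; 1; 1; 0; 1]; [:: 2; 0; 2; 0; 2; 1; 0; 0; 0; 1; 1; 2; 1; 1; 1; 2; 2; 0; 0; 1; 1; 1; 2; 1; 2; 2; 0; 1; 2; 1]; [:: 1; 0; 0; 2; 1; 2; 1; 0; 2; 0; 2; 2; 1; 0; 2; 1; 1; 2; 0; 1; 0; 0; 1; 0; 0; 1; 1; 0; 2; 1]; [:: 1; 2; 2; 1; 0; 1; 0; 2; 2; 0; 1; 0; 0; 1; 2; 2; 0; 0; 0; 1; 1; 2; 1; 1; 0; 2; 1; 1; 0; 1]; [:: 1; 0; 1; 2; 0; 0; 2; 1; 1; 1; 1; 0; 1; 0; 2; 1; 1; 0; 2; 1; 0; 0; 2; 0; 0; 0; 1; 0; 2; 2]; [:: 1; 0; 2; 1; 0; 2; 2;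 1; 2; 1; 0; 2; 2; 0; 2; 2; 0; 1; 0; 1; 0; 1; 2; 1; 2; 1; 0; 1; 0; 1]; [:: 0; 0; 2; 1; 1; 0; 0; 1; 1; 0; 2; 2; 1; 2; 0; 1; 0; 0; 2; 1; 2; 2; 0; 1; 2; 1; 0; 0; 1; 2]; [:: 2; 2; 0; 0; 1; 2; 1; 1; 0; 2; 1; 1; 2; 0; 0; 0; 0; 2; 2; 1; 2; 0; 2; 0; 0; 0; 1; 2; 2; 0]; [:: 1; 0; 0; 0; 2; 2; 0; 0; 2; 2; 1; 2; 1; 1; 2; 1; 0; 0; 0; 1; 1; 2; 2; 0; 1; 2; 0; 0; 0; 2]; [:: 1; 0; 0; 0; 1; 1; 0; 1; 2; 1; 2; 1; 0; 1; 2; 1; 0; 1; 0; 0; 2; 0; 0; 0; 1; 0; 2; 0; 0; 0]; [:: 1; 1; 2; 2; 1; 0; 1; 0; 0; 2; 0; 1; 1; 0; 0; 1; 0; 0; 0; 0; 1; 0; 0; 1; 1; 1; 1; 2; 0; 1]; [:: 2; 0; 0; 2; 1; 2; 2; 2; 2; 0; 0; 2; 2; 0; 1; 1; 2; 2; 2; 2; 1; 0; 0; 0; 2; 2; 0; 2; 0; 1]; [:: 1; 2; 0; 1; 2; 1; 2; 1; 2; 1; 0; 1; 1; 1; 1; 1; 0; 1; 1; 1; 1; 1; 0; 1; 1; 1; 1; 0; 1; 0]; [:: 1; 0; 1; 0; 2; 1; 0; 1; 0; 0; 0; 0; 0; 0; 2; 0; 2; 2; 1; 1; 2; 1; 0;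 0; 0; 0; 1; 2; 0; 2]; [:: 2; 1; 2; 0; 0; 2; 0; 0; 1; 0; 2; 0; 1; 0; 2; 1; 2; 2; 0; 1; 2; 2; 1; 2; 2; 1; 0; 1; 1; 2]; [:: 2; 2; 1; 2; 0; 0; 0; 2; 0; 2; 2; 0; 0; 0; 2; 1; 1; 0; 0; 1; 0; 1; 2; 2; 0; 1; 1; 1; 2; 0]; [:: 1; 1; 0; 1; 1; 1; 1; 1; 1; 1; 1; 1; 0; 0; 2; 1; 1; 1; 1; 1; 0; 1; 0; 0; 0; 0; 0; 1; 1; 1]; [:: 0; 2; 0; 2; 1; 0; 1; 0; 0; 2; 2; 1; 2; 1; 1; 1; 2; 2; 0; 0; 1; 1; 0; 1; 1; 2; 0; 2; 1; 0]; [:: 2; 0; 0; 1; 1; 0; 2; 0; 1; 2; 0; 2; 0; 0; 0; 1; 1; 2; 1; 1; 1; 2; 1; 0; 1; 1; 1; 0; 0; 1]; [:: 0; 0; 0; 0; 2; 1; 1; 2; 2; 0; 2; 2; 0; 0; 0; 0; 0; 1; 2; 0; 0; 1; 2; 0; 0; 1; 2; 2; 0; 2]; [:: 2; 0; 2; 1; 1; 0; 1; 0; 1; 1; 0; 0; 0; 1; 0; 1; 0; 2; 2; 0; 1; 0; 0; 2; 1; 0; 1; 2; 1; 0]; [:: 2; 1; 1; 2; 2; 0; 0; 0; 2; 2; 0; 1; 1; 1; 2; 1; 0; 2; 0; 0; 1; 1; 0; 1; 0; 1; 0; 2; 0; 2]; [:: 1; 0; 2; 0; 2; 1; 2; 0;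 1; 1; 0; 2; 0; 1; 2; 1; 0; 1; 1; 0; 2; 1; 1; 0; 1; 0; 2; 2; 1; 1]; [:: 2; 0; 1; 1; 0; 1; 1; 1; 0; 0; 1; 0; 2; 1; 0; 1; 1; 0; 1; 0; 0; 1; 2; 1; 0; 2; 1; 2; 0; 1]; [:: 0; 1; 0; 1; 1; 0; 1; 0; 1; 0; 2; 0; 0; 2; 2; 0; 2; 1; 1; 1; 2; 0; 2; 2; 2; 2; 2; 1; 2; 1]; [:: 2; 2; 0; 0; 2; 2; 0; 2; 0; 1; 2; 0; 0; 0; 0; 1; 0; 1; 2; 1; 1; 0; 0; 1; 0; 1; 0; 2; 0; 1]; [:: 2; 2; 1; 1; 1; 1; 1; 2; 1; 2; 0; 2; 0; 1; 1; 0; 2; 2; 0; 1; 0; 1; 2; 0; 2; 1; 1; 1; 1; 1]].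

Lemma fsd_lcd_block16 :
  fsd_lcd_block 5 (seqmx_mx 16 B16) /\ attains_weight 5 (seqmx_mx 16 B16).
Proof. by apply: (@fsd_lcd_certificateP _ 2 _ _ B16_inv B16_sq1_inv 8); vm_compute. Qed.

Lemma fsd_lcd_block18 :
  fsd_lcd_block 6 (seqmx_mx 18 B18) /\ attains_weight 6 (seqmx_mx 18 B18).
Proof. by apply: (@fsd_lcd_certificateP _ 2 _ _ B18_inv B18_sq1_inv 10); vm_compute. Qed.

Lemma fsd_lcd_block20 :
  fsd_lcd_block 6 (seqmx_mx 20 B20) /\ attains_weight 6 (seqmx_mx 20 B20).
Proof. by apply: (@fsd_lcd_certificateP _ 2 _ _ B20_inv B20_sq1_inv 11); vm_compute. Qed.

Lemma fsd_lcd_block22 :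
  fsd_lcd_block 7 (seqmx_mx 22 B22) /\ attains_weight 7 (seqmx_mx 22 B22).
Proof. by apply: (@fsd_lcd_certificateP _ 3 _ _ B22_inv B22_sq1_inv 1); vm_compute. Qed.

Lemma fsd_lcd_block24 :
  fsd_lcd_block 7 (seqmx_mx 24 B24) /\ attains_weight 7 (seqmx_mx 24 B24).
Proof. by apply: (@fsd_lcd_certificateP _ 3 _ _ B24_inv B24_sq1_inv 15); vm_compute. Qed.

Lemma fsd_lcd_block26 :
  fsd_lcd_block 7 (seqmx_mx 26 B26) /\ attains_weight 7 (seqmx_mx 26 B26).
Proof. by apply: (@fsd_lcd_certificateP _ 3 _ _ B26_inv B26_sq1_inv 14); vm_compute. Qed.

Lemma fsd_lcd_block28 :
  fsd_lcd_block 8 (seqmx_mx 28 B28) /\ attains_weight 8 (seqmx_mx 28 B28).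
Proof. by apply: (@fsd_lcd_certificateP _ 3 _ _ B28_inv B28_sq1_inv 21); vm_compute. Qed.

Lemma fsd_lcd_block30 :
  fsd_lcd_block 8 (seqmx_mx 30 B30) /\ attains_weight 8 (seqmx_mx 30 B30).
Proof. by apply: (@fsd_lcd_certificateP _ 3 _ _ B30_inv B30_sq1_inv 4); vm_compute. Qed.

Theorem theorem7 (s : nat) : (1 <= s)%N ->
  (forall n1 : nat, n1 \in [:: 9; 10]%N ->
     exists C : code (4 * s * n1), fsd_lcd_code C (2 * s * n1) 6) /\
  (forall n2 : nat, n2 \in [:: 11; 12; 13]%N ->
     exists C : code (4 * s * n2), fsd_lcd_code C (2 * s * n2) 7) /\
  (forall n3 : nat, n3 \in [:: 14; 15]%N ->
     exists C : code (4 * s * n3), fsd_lcd_code C (2 * s * n3) 8) /\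
  (exists C : code (32 * s), fsd_lcd_code C (16 * s) 5).
Proof.
move=> s_gt0; split; [|split; [|split]].
- move=> n; rewrite !inE => /orP [] /eqP ->.
  + exact: (@fsd_lcd_code_double _ 9 _ _ fsd_lcd_block18 s_gt0).
  + exact: (@fsd_lcd_code_double _ 10 _ _ fsd_lcd_block20 s_gt0).
- move=> n; rewrite !inE => /or3P [] /eqP ->.
  + exact: (@fsd_lcd_code_double _ 11 _ _ fsd_lcd_block22 s_gt0).
  + exact: (@fsd_lcd_code_double _ 12 _ _ fsd_lcd_block24 s_gt0).
  + exact: (@fsd_lcd_code_double _ 13 _ _ fsd_lcd_block26 s_gt0).
- move=> n; rewrite !inE => /orP [] /eqP ->.
  + exact: (@fsd_lcd_code_double _ 14 _ _ fsd_lcd_block28 s_gt0).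
  + exact: (@fsd_lcd_code_double _ 15 _ _ fsd_lcd_block30 s_gt0).
- have -> : (32 * s = 4 * s * 8)%N by lia.
  have -> : (16 * s = 2 * s * 8)%N by lia.
  exact: (@fsd_lcd_code_double _ 8 _ _ fsd_lcd_block16 s_gt0).
Qed.
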